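(* Let $\alpha>1$, $f\in SR_\alpha$, $b<\alpha$ and $k\in SR_b$. (i) There is $r_o>0$ such that for every $\Lambda>r_o$ the equation \[ g(\Lambda)f'(g(\Lambda))-f(g(\Lambda))+k(g(\Lambda))=\ln\Lambda \] has a unique solution $g\in SR_0$. Moreover, the function $h:(\ln r_o,\infty)\to\mathbb{R}$, $h(\Lambda)=g(\exp(\Lambda))$, belongs to $SR_{1/\alpha}$. (ii) For each $\gamma>0$ and $\delta>0$ there is $z>r_o$ such that for every $\Lambda>z$ and every $y\in[(\ln\Lambda)^{-\gamma},(\ln\Lambda)^{\gamma}]$, \[ \Big|g(\Lambda)\big[f'(g(y\Lambda))-f'(g(\Lambda))\big]-\ln y\Big|\le\delta|\ln y|. \] (iii) $\displaystyle\lim_{\Lambda\to\infty}\frac{g'(\Lambda)\Lambda\ln\Lambda}{g(\Lambda)}=\frac1\alpha$, $\displaystyle\lim_{\Lambda\to\infty}\frac{f(g(\Lambda))}{\ln\Lambda}=\frac1{\alpha-1}$, $\displaystyle\lim_{\Lambda\to\infty}\frac{g(\Lambda)f'(g(\Lambda))}{\ln\Lambda}=\frac{\alpha}{\alpha-1}$, and $\displaystyle\lim_{\Lambda\to\infty}\frac{g(\Lambda)f'(g(\Lambda))-f(g(\Lambda))}{\ln\Lambda}=1$. (iv) Let $k_0,k_1\in SR_b$ be such that $c:=\lim_{\Lambda\to\infty}(k_1(\Lambda)-k_0(\Lambda))\in\mathbb{R}$, and for $i\in\{0,1\}$ let $g_i$ be the unique solution of $g_i(\Lambda)f'(g_i(\Lambda))-f(g_i(\Lambda))+k_i(g_i(\Lambda))=\ln\Lambda$.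 Then for $i\in\{0,1\}$, \[ \lim_{\Lambda\to\infty}g_i(\Lambda)\big(f'(g_0(\Lambda))-f'(g_1(\Lambda))\big)=c. \]
   Context: A function $f:(z,\infty)\to\mathbb{R}$ is in $SR_\alpha$ (smoothly regularly varying with index $\alpha$) if $f$ is $C^\infty$, $z_o:=\max\{1,\sup\{\Lambda\ge z:f(\Lambda)\le0\}\}<\infty$, and $h(u):=\ln f(e^u)$ on $(\ln z_o,\infty)$ satisfies $h'(u)\to\alpha$ and $h^{(m)}(u)\to0$ for $m\ge2$ as $u\to\infty$. *)

From Stdlib Require Import Reals.
From Coquelicot Require Import Coquelicot.
Open Scope R_scope.

(* f : (z, oo) -> R is in SR_alpha (smoothly regularly varying with index alpha).
   f is a total function R -> R; only its values on (z, oo) matter. *)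
Definition SR_on (z alpha : R) (f : R -> R) : Prop :=
  (forall (n : nat) (x : R), z < x -> ex_derive_n f n x) /\
  (* z_o = max{1, sup{L >= z : f L <= 0}} < oo, i.e. that set is bounded above *)
  (exists M : R, forall x : R, z < x -> f x <= 0 -> x <= M) /\
  (let h := fun u : R => ln (f (exp u)) in
   is_lim (Derive h) p_infty (Finite alpha) /\
   forall m : nat, (2 <= m)%nat -> is_lim (Derive_n h m) p_infty (Finite 0)).

Definition SR (alpha : R) (f : R -> R) : Prop := exists z : R, SR_on z alpha f.

Definition sol_eq (f k : R -> R) (L x : R) : Prop :=
  x * Derive f x - f x + k x = ln L.

Definition is_solution_map (f k : R -> R) (r : R) (g : R -> R) : Prop :=
  exists x_o : R, forall L : R, r < L ->
    x_o < g L /\ sol_eq f k L (g L) /\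
    (forall x : R, x_o < x -> sol_eq f k L x -> x = g L).

(* Writing x = e^v and S(x) = x f'(x) - f(x) + k(x), the equation reads
   Phi(v) = ln ln L with Phi(v) = ln S(e^v) = h(v) + ln (h'(v) - 1 + k(e^v)/f(e^v)),
   where h = ln o f o exp.  As h' -> alpha and k/f -> 0 (because b < alpha), Phi' -> alpha
   while all higher derivatives of Phi vanish at infinity, so Phi has an increasing
   inverse H on a half-line and g(L) = exp (H (ln ln L)).  Then H' = 1/Phi'(H) -> 1/alpha
   with vanishing higher derivatives, which gives the regular variation of g and the first
   limit of (iii); the other limits of (iii) are those of f/S, x f'/S and (x f' - f)/S.
   Parts (ii) and (iv) rest on a single estimate: by Cauchy's mean value theorem for
   f'(e^v) and S(e^v), whose derivatives have ratio e^(-v) (1 + o(1)),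
   x (f'(x') - f'(x)) = (1 + o(1)) (S(x') - S(x)) uniformly as ln x' - ln x -> 0.
   In (ii), S(g(yL)) - S(g(L)) = ln y; in (iv), S_0(g_1) - S_0(g_0) = k_0(g_1) - k_1(g_1),
   and ln g_1 - ln g_0 -> 0 because Phi_0 is bi-Lipschitz and ln S_0 - ln S_1 -> 0. *)

From Stdlib Require Import Reals Lra Lia ClassicalEpsilon.
From Coquelicot Require Import Coquelicot.
Open Scope R_scope.

Notation at_top := (Rbar_locally p_infty).

Lemma at_top_gt a : at_top (fun x => a < x).
Proof. exists a; auto. Qed.

Lemma at_top_forall_gt (P : R -> Prop) :
  at_top P -> at_top (fun t => forall x, t < x -> P x).
Proof. intros [M HM]; exists M; intros t Ht x Hx; apply HM; lra. Qed.

Lemma is_lim_at_top_near (p : R -> R) (l eps : R) :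
  is_lim p p_infty l -> 0 < eps -> at_top (fun x => Rabs (p x - l) < eps).
Proof. intros Hp He; apply is_lim_spec in Hp; exact (Hp (mkposreal _ He)). Qed.

Lemma is_lim_at_top_gt (p : R -> R) (l c : R) :
  is_lim p p_infty l -> c < l -> at_top (fun x => c < p x).
Proof.
  intros Hp Hc; eapply filter_imp; [|exact (is_lim_at_top_near p l (l - c) Hp ltac:(lra))].
  intros x H; apply Rabs_def2 in H; lra.
Qed.

Lemma is_lim_at_top_lt (p : R -> R) (l c : R) :
  is_lim p p_infty l -> l < c -> at_top (fun x => p x < c).
Proof.
  intros Hp Hc; eapply filter_imp; [|exact (is_lim_at_top_near p l (c - l) Hp ltac:(lra))].
  intros x H; apply Rabs_def2 in H; lra.
Qed.

Lemma at_top_comp (q : R -> R) (P : R -> Prop) :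
  is_lim q p_infty p_infty -> at_top P -> at_top (fun x => P (q x)).
Proof. intros Hq HP; exact (Hq P HP). Qed.

Lemma is_lim_comp_p_infty (p q : R -> R) (l : Rbar) :
  is_lim p p_infty l -> is_lim q p_infty p_infty -> is_lim (fun x => p (q x)) p_infty l.
Proof. intros Hp Hq; exact (filterlim_comp _ _ _ q p _ _ _ Hq Hp). Qed.

Lemma is_lim_mult_fin (p q : R -> R) (lp lq : R) :
  is_lim p p_infty lp -> is_lim q p_infty lq -> is_lim (fun x => p x * q x) p_infty (lp * lq).
Proof. intros Hp Hq; exact (is_lim_mult p q p_infty lp lq Hp Hq I). Qed.

Lemma is_lim_inv_fin (p : R -> R) (l : R) :
  is_lim p p_infty l -> l <> 0 -> is_lim (fun x => / p x) p_infty (/ l).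
Proof. intros Hp Hl; apply (is_lim_inv p p_infty l Hp); congruence. Qed.

Lemma is_lim_exp_fin (p : R -> R) (l : R) :
  is_lim p p_infty l -> is_lim (fun x => exp (p x)) p_infty (exp l).
Proof. intros Hp; apply (is_lim_comp_continuous p exp p_infty l Hp), continuous_exp. Qed.

Lemma is_lim_ln_fin (p : R -> R) (l : R) :
  is_lim p p_infty l -> 0 < l -> is_lim (fun x => ln (p x)) p_infty (ln l).
Proof. intros Hp Hl; apply (is_lim_comp_continuous p ln p_infty l Hp), continuous_ln, Hl. Qed.

Lemma is_lim_exp_m_infty (p : R -> R) :
  is_lim p p_infty m_infty -> is_lim (fun x => exp (p x)) p_infty 0.
Proof. intros Hp; exact (filterlim_comp _ _ _ p exp _ _ _ Hp is_lim_exp_m). Qed.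

Lemma is_lim_of_exp (p : R -> R) (l : Rbar) :
  is_lim (fun v => p (exp v)) p_infty l -> is_lim p p_infty l.
Proof.
  intros Hp; apply is_lim_ext_loc with (fun x => p (exp (ln x))).
  - exists 0; intros x Hx; rewrite exp_ln; auto.
  - exact (is_lim_comp_p_infty _ ln l Hp is_lim_ln_p).
Qed.

Lemma is_lim_abs_le (p q : R -> R) (C : R) :
  at_top (fun x => Rabs (p x) <= C * Rabs (q x)) -> is_lim q p_infty 0 -> is_lim p p_infty 0.
Proof.
  intros Hpq Hq.
  apply is_lim_le_le_loc with (fun x => - (C * Rabs (q x))) (fun x => C * Rabs (q x)).
  - eapply filter_imp; [|exact Hpq]. intros x H; apply Rabs_le_between; auto.
  - replace (Finite 0) with (Rbar_opp (Rbar_mult C (Rbar_abs 0))) by (simpl; f_equal; rewrite Rabs_R0; ring).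
    apply is_lim_opp, is_lim_scal_l, is_lim_Rabs, Hq.
  - replace (Finite 0) with (Rbar_mult C (Rbar_abs 0)) by (simpl; f_equal; rewrite Rabs_R0; ring).
    apply is_lim_scal_l, is_lim_Rabs, Hq.
Qed.

Lemma is_lim_rel_error (p q : R -> R) (c : R) :
  is_lim q p_infty c ->
  (forall eps, 0 < eps -> at_top (fun x => Rabs (p x - q x) <= eps * Rabs (q x))) ->
  is_lim p p_infty c.
Proof.
  intros Hq Hpq. apply is_lim_spec; intros eps.
  set (e := eps / (2 * (Rabs c + 1))).
  assert (He : 0 < e) by (unfold e; apply Rdiv_lt_0_compat; [apply cond_pos | pose proof (Rabs_pos c); lra]).
  assert (He1 : e * (Rabs c + 1) = eps / 2) by (unfold e; field; pose proof (Rabs_pos c); lra).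
  eapply filter_imp; [|exact (filter_and _ _ (Hpq e He) (is_lim_at_top_near q c (Rmin 1 (eps / 2)) Hq
       (Rmin_pos _ _ Rlt_0_1 (is_pos_div_2 eps))))].
  intros x [H1 H2].
  assert (Hq1 : Rabs (q x) <= Rabs c + 1).
  { pose proof (Rabs_triang_inv (q x) c); pose proof (Rmin_l 1 (eps / 2)); lra. }
  replace (p x - c) with ((p x - q x) + (q x - c)) by ring.
  eapply Rle_lt_trans; [apply Rabs_triang|].
  assert (e * Rabs (q x) <= e * (Rabs c + 1)) by (apply Rmult_le_compat_l; lra).
  pose proof (Rmin_r 1 (eps / 2)); lra.
Qed.

(** * Smoothness on half-lines *)

Fixpoint diff_on (n : nat) (a : R) (p : R -> R) : Prop :=
  match n with
  | O => True
  | S n => (forall x, a < x -> ex_derive p x) /\ diff_on n a (Derive p)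
  end.

Definition smooth_on (a : R) (p : R -> R) : Prop := forall n, diff_on n a p.

Lemma locally_gt a x : a < x -> locally x (fun y => a < y).
Proof.
  intros H; assert (He : 0 < x - a) by lra; exists (mkposreal _ He).
  intros y Hy; change (Rabs (y - x) < x - a) in Hy; apply Rabs_def2 in Hy; lra.
Qed.

Lemma locally_of_gt (P : R -> Prop) a x : (forall y, a < y -> P y) -> a < x -> locally x P.
Proof. intros HP Hx; eapply filter_imp; [exact HP | exact (locally_gt a x Hx)]. Qed.

Lemma diff_on_S n a p : diff_on (S n) a p -> diff_on n a p.
Proof.
  revert p; induction n as [|n IH]; intros p [H1 H2]; [exact I | split; auto].
Qed.

Lemma diff_on_mono n a a' p : a <= a' -> diff_on n a p -> diff_on n a' p.
Proof.
  intros Ha; revert p; induction n as [|n IH]; intros p H; simpl in *; auto.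
  destruct H as [H1 H2]; split; auto. intros x Hx; apply H1; lra.
Qed.

Lemma smooth_on_mono a a' p : a <= a' -> smooth_on a p -> smooth_on a' p.
Proof. intros Ha H n; exact (diff_on_mono n a a' p Ha (H n)). Qed.

Lemma diff_on_ext n a p q : (forall x, a < x -> p x = q x) -> diff_on n a p -> diff_on n a q.
Proof.
  revert p q; induction n as [|n IH]; intros p q E H; simpl in *; auto.
  destruct H as [H1 H2]; split.
  - intros x Hx; apply ex_derive_ext_loc with p; [apply (locally_of_gt _ a); auto | auto].
  - apply IH with (Derive p); auto.
    intros x Hx; apply Derive_ext_loc, (locally_of_gt _ a); auto.
Qed.

Lemma smooth_on_Derive a p : smooth_on a p -> smooth_on a (Derive p).
Proof. intros H n; exact (proj2 (H (S n))). Qed.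

Lemma smooth_on_ex_derive a p x : smooth_on a p -> a < x -> ex_derive p x.
Proof. intros H Hx; exact (proj1 (H 1%nat) x Hx). Qed.

Lemma at_top_ex_derive_of_smooth p :
  at_top (fun t => smooth_on t p) -> at_top (fun x => ex_derive p x).
Proof.
  intros [M HM]; exists (M + 1); intros x Hx; apply (smooth_on_ex_derive (M + 1)); auto; apply HM; lra.
Qed.

Lemma at_top_locally (P : R -> Prop) : at_top P -> at_top (fun x => locally x P).
Proof. intros [M HM]; exists M; intros x Hx; apply (locally_of_gt _ M); auto. Qed.

Lemma Derive_n_Derive n p x : Derive_n (Derive p) n x = Derive_n p (S n) x.
Proof. rewrite (Derive_n_comp p n 1), Nat.add_1_r; reflexivity. Qed.

Lemma smooth_on_ex_derive_Derive_n a p n x :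
  smooth_on a p -> a < x -> ex_derive (Derive_n p n) x.
Proof.
  revert p; induction n as [|n IH]; intros p H Hx.
  - exact (smooth_on_ex_derive a p x H Hx).
  - apply ex_derive_ext with (Derive_n (Derive p) n); [intros; apply Derive_n_Derive|].
    apply IH; [apply smooth_on_Derive, H | exact Hx].
Qed.

Lemma smooth_on_iff a p : smooth_on a p <-> forall n x, a < x -> ex_derive_n p n x.
Proof.
  split.
  - intros H [|n] x Hx; simpl; [exact I | exact (smooth_on_ex_derive_Derive_n a p n x H Hx)].
  - intros H n.
    assert (H' : forall j x, a < x -> ex_derive (Derive_n p j) x) by (intros j x Hx; exact (H (S j) x Hx)).
    clear H; revert p H'; induction n as [|n IH]; intros p H; simpl; auto.
    split; [exact (H 0%nat) |].
    apply IH; intros j x Hx.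
    apply ex_derive_ext with (Derive_n p (S j)); [intros; symmetry; apply Derive_n_Derive | auto].
Qed.

Lemma diff_on_const n a c : diff_on n a (fun _ => c).
Proof.
  revert c; induction n as [|n IH]; intros c; simpl; auto. split.
  - intros; apply ex_derive_const.
  - apply diff_on_ext with (fun _ => 0); auto. intros; rewrite Derive_const; auto.
Qed.

Lemma diff_on_id n a : diff_on n a (fun x => x).
Proof.
  destruct n; simpl; auto. split.
  - intros; apply ex_derive_id.
  - apply diff_on_ext with (fun _ => 1); [intros x _; rewrite Derive_id; auto | apply diff_on_const].
Qed.

Lemma diff_on_plus n a p q : diff_on n a p -> diff_on n a q -> diff_on n a (fun x => p x + q x).
Proof.
  revert p q; induction n as [|n IH]; intros p q Hp Hq; simpl in *; auto.
  destruct Hp as [Hp1 Hp2], Hq as [Hq1 Hq2]; split.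
  - intros x Hx; apply (ex_derive_plus p q); auto.
  - apply diff_on_ext with (fun x => Derive p x + Derive q x); auto.
    intros x Hx; rewrite Derive_plus; auto.
Qed.

Lemma diff_on_mult n a p q : diff_on n a p -> diff_on n a q -> diff_on n a (fun x => p x * q x).
Proof.
  revert p q; induction n as [|n IH]; intros p q Hp Hq; simpl; auto.
  pose proof (diff_on_S _ _ _ Hp) as Hp'; pose proof (diff_on_S _ _ _ Hq) as Hq'.
  destruct Hp as [Hp1 Hp2], Hq as [Hq1 Hq2]; split.
  - intros x Hx; apply ex_derive_mult; auto.
  - apply diff_on_ext with (fun x => Derive p x * q x + p x * Derive q x).
    + intros x Hx; rewrite Derive_mult; auto.
    + apply diff_on_plus; auto.
Qed.

Lemma diff_on_minus n a p q : diff_on n a p -> diff_on n a q -> diff_on n a (fun x => p x - q x).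
Proof.
  intros Hp Hq; apply diff_on_ext with (fun x => p x + (-1) * q x); [intros; ring|].
  apply diff_on_plus, diff_on_mult; auto; apply diff_on_const.
Qed.

Lemma diff_on_comp n a b p q :
  diff_on n b p -> diff_on n a q -> (forall x, a < x -> b < q x) -> diff_on n a (fun x => p (q x)).
Proof.
  revert p q; induction n as [|n IH]; intros p q Hp Hq Hab; simpl; auto.
  pose proof (diff_on_S _ _ _ Hq) as Hq'.
  destruct Hp as [Hp1 Hp2], Hq as [Hq1 Hq2]; split.
  - intros x Hx; apply ex_derive_comp; auto.
  - apply diff_on_ext with (fun x => Derive q x * Derive p (q x)).
    + intros x Hx; rewrite (Derive_comp p q x); auto.
    + apply diff_on_mult; auto.
Qed.

Lemma diff_on_exp_comp n a q : diff_on n a q -> diff_on n a (fun x => exp (q x)).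
Proof.
  revert q; induction n as [|n IH]; intros q Hq; simpl; auto.
  pose proof (diff_on_S _ _ _ Hq) as Hq'; destruct Hq as [H1 H2]; split.
  - intros x Hx; apply ex_derive_comp; auto; eexists; apply is_derive_exp.
  - apply diff_on_ext with (fun x => Derive q x * exp (q x)); [|apply diff_on_mult; auto].
    intros x Hx; symmetry; apply is_derive_unique.
    apply (is_derive_comp exp q x); [apply is_derive_exp | apply Derive_correct; auto].
Qed.

Lemma diff_on_exp n a : diff_on n a exp.
Proof. exact (diff_on_exp_comp n a _ (diff_on_id n a)). Qed.

Lemma diff_on_Rinv n : diff_on n 0 Rinv.
Proof.
  induction n as [|n IH]; simpl; auto. split.
  - intros x Hx; auto_derive; lra.
  - apply diff_on_ext with (fun x => (-1) * (/ x * / x)).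
    + intros x Hx; symmetry; apply is_derive_unique; auto_derive; [lra | field; lra].
    + apply diff_on_mult; [apply diff_on_const | apply diff_on_mult; auto].
Qed.

Lemma diff_on_ln n : diff_on n 0 ln.
Proof.
  destruct n; simpl; auto. split.
  - intros x Hx; eexists; apply is_derive_ln; auto.
  - apply diff_on_ext with Rinv; [|apply diff_on_Rinv].
    intros x Hx; symmetry; apply is_derive_unique, is_derive_ln; auto.
Qed.

(** * Functions whose derivatives settle at +oo *)

Fixpoint flat (n : nat) (p : R -> R) : Prop :=
  ex_finite_lim p p_infty /\
  match n with
  | O => True
  | S n => at_top (fun x => ex_derive p x) /\ is_lim (Derive p) p_infty 0 /\ flat n (Derive p)
  end.

Lemma flat_lim n p : flat n p -> ex_finite_lim p p_infty.
Proof. destruct n; simpl; tauto. Qed.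

Lemma flat_S n p : flat (S n) p -> flat n p.
Proof.
  revert p; induction n as [|n IH]; intros p H; [exact (conj (proj1 H) I)|].
  destruct H as (H1 & H2 & H3 & H4); exact (conj H1 (conj H2 (conj H3 (IH _ H4)))).
Qed.

Lemma at_top_Derive_ext (p q : R -> R) :
  at_top (fun x => p x = q x) -> at_top (fun x => Derive p x = Derive q x).
Proof. intros [M H]; exists M; intros x Hx; apply Derive_ext_loc, (locally_of_gt _ M); auto. Qed.

Lemma at_top_ex_derive_ext (p q : R -> R) :
  at_top (fun x => p x = q x) -> at_top (fun x => ex_derive p x) -> at_top (fun x => ex_derive q x).
Proof.
  intros [M H] [M' H']; exists (Rmax M M'); intros x Hx.
  apply ex_derive_ext_loc with p.
  - apply (locally_of_gt _ M); auto; pose proof (Rmax_l M M'); lra.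
  - apply H'; pose proof (Rmax_r M M'); lra.
Qed.

Lemma flat_ext n p q : at_top (fun x => p x = q x) -> flat n p -> flat n q.
Proof.
  revert p q; induction n as [|n IH]; intros p q E [[l Hl] H]; split;
    try (exists l; apply (is_lim_ext_loc p); auto).
  - exact I.
  - destruct H as (H2 & H3 & H4); split; [|split].
    + apply at_top_ex_derive_ext with p; auto.
    + apply (is_lim_ext_loc (Derive p)); auto; apply at_top_Derive_ext, E.
    + apply IH with (Derive p); auto; apply at_top_Derive_ext, E.
Qed.

Lemma flat_const n c : flat n (fun _ => c).
Proof.
  revert c; induction n as [|n IH]; intros c; (split; [exists c; apply is_lim_const|]); [exact I|].
  assert (E : at_top (fun x => 0 = Derive (fun _ => c) x)) by (exists 0; intros; rewrite Derive_const; auto).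
  split; [|split].
  - exists 0; intros; apply ex_derive_const.
  - apply (is_lim_ext_loc (fun _ => 0)); [exact E | apply is_lim_const].
  - apply flat_ext with (fun _ => 0); auto.
Qed.

Lemma flat_plus n p q : flat n p -> flat n q -> flat n (fun x => p x + q x).
Proof.
  revert p q; induction n as [|n IH]; intros p q [[lp Hp] Hp'] [[lq Hq] Hq'];
    (split; [exists (lp + lq); apply is_lim_plus'; auto|]); [exact I|].
  destruct Hp' as (Hp2 & Hp3 & Hp4), Hq' as (Hq2 & Hq3 & Hq4).
  assert (E : at_top (fun x => Derive p x + Derive q x = Derive (fun x => p x + q x) x)).
  { eapply filter_imp; [|exact (filter_and _ _ Hp2 Hq2)].
    intros x [A B]; rewrite Derive_plus; auto. }
  split; [|split].
  - eapply filter_imp; [|exact (filter_and _ _ Hp2 Hq2)].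
    intros x [A B]; apply (ex_derive_plus p q); auto.
  - apply (is_lim_ext_loc _ _ p_infty _ E); replace (Finite 0) with (Finite (0 + 0)) by (f_equal; ring).
    apply is_lim_plus'; auto.
  - apply flat_ext with (1 := E), IH; auto.
Qed.

Lemma flat_mult n p q : flat n p -> flat n q -> flat n (fun x => p x * q x).
Proof.
  revert p q; induction n as [|n IH]; intros p q Hp Hq.
  - destruct Hp as [[lp Hp] _], Hq as [[lq Hq] _].
    split; [exists (lp * lq); apply is_lim_mult_fin; auto | exact I].
  - pose proof (flat_S _ _ Hp) as Hp'; pose proof (flat_S _ _ Hq) as Hq'.
    destruct Hp as ([lp Hp1] & Hp2 & Hp3 & Hp4), Hq as ([lq Hq1] & Hq2 & Hq3 & Hq4).
    assert (E : at_top (fun x => Derive p x * q x + p x * Derive q x = Derive (fun x => p x * q x) x)).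
    { eapply filter_imp; [|exact (filter_and _ _ Hp2 Hq2)].
      intros x [A B]; rewrite Derive_mult; auto. }
    split; [exists (lp * lq); apply is_lim_mult_fin; auto|]. split; [|split].
    + eapply filter_imp; [|exact (filter_and _ _ Hp2 Hq2)].
      intros x [A B]; apply ex_derive_mult; auto.
    + apply (is_lim_ext_loc _ _ p_infty _ E).
      replace (Finite 0) with (Finite (0 * lq + lp * 0)) by (f_equal; ring).
      apply is_lim_plus'; apply is_lim_mult_fin; auto.
    + apply flat_ext with (1 := E), flat_plus; apply IH; auto.
Qed.

Lemma flat_minus n p q : flat n p -> flat n q -> flat n (fun x => p x - q x).
Proof.
  intros Hp Hq; apply flat_ext with (fun x => p x + (-1) * q x); [exists 0; intros; ring|].
  apply flat_plus, flat_mult; auto; apply flat_const.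
Qed.

Lemma flat_inv n p (l : R) : is_lim p p_infty l -> l <> 0 -> flat n p -> flat n (fun x => / p x).
Proof.
  intros Hl Hl0.
  assert (Hne : at_top (fun x => p x <> 0)).
  { eapply filter_imp; [|exact (is_lim_at_top_near p l (Rabs l) Hl (Rabs_pos_lt l Hl0))].
    intros x Hx E; cbv beta in Hx; rewrite E, Rminus_0_l, Rabs_Ropp in Hx; lra. }
  revert p Hl Hne; induction n as [|n IH]; intros p Hl Hne Hp.
  - split; [exists (/ l); apply is_lim_inv_fin; auto | exact I].
  - pose proof (flat_S _ _ Hp) as Hp'; destruct Hp as (_ & Hp2 & Hp3 & Hp4).
    assert (E : at_top (fun x => (-1) * Derive p x * (/ p x * / p x) = Derive (fun x => / p x) x)).
    { eapply filter_imp; [|exact (filter_and _ _ Hp2 Hne)].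
      intros x [[d A] B]; symmetry; apply is_derive_unique.
      rewrite (is_derive_unique _ _ _ A).
      replace ((-1) * d * (/ p x * / p x)) with (- d / p x ^ 2) by (field; auto).
      apply is_derive_inv; auto. }
    split; [exists (/ l); apply is_lim_inv_fin; auto|]. split; [|split].
    + eapply filter_imp; [|exact (filter_and _ _ Hp2 Hne)].
      intros x [[d A] B]; eexists; apply is_derive_inv; eauto.
    + apply (is_lim_ext_loc _ _ p_infty _ E).
      replace (Finite 0) with (Finite ((-1) * 0 * (/ l * / l))) by (f_equal; ring).
      apply is_lim_mult_fin; [apply is_lim_mult_fin; [apply is_lim_const | auto]|].
      apply is_lim_mult_fin; apply is_lim_inv_fin; auto.
    + apply flat_ext with (1 := E), flat_mult; [apply flat_mult; [apply flat_const | auto]|].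
      apply flat_mult; apply IH; auto.
Qed.

Lemma flat_ln n p (l : R) :
  is_lim p p_infty l -> 0 < l -> flat n p -> flat n (fun x => ln (p x)).
Proof.
  intros Hl Hl0 Hp.
  assert (Hpos : at_top (fun x => 0 < p x)) by exact (is_lim_at_top_gt p l 0 Hl Hl0).
  destruct n as [|n]; [split; [exists (ln l); apply is_lim_ln_fin; auto | exact I]|].
  pose proof (flat_S _ _ Hp) as Hp'; destruct Hp as (_ & H2 & H3 & H4).
  assert (E : at_top (fun x => Derive p x * / p x = Derive (fun x => ln (p x)) x)).
  { eapply filter_imp; [|exact (filter_and _ _ H2 Hpos)]. intros x [A B].
    symmetry; apply is_derive_unique, (is_derive_comp ln p x); [apply is_derive_ln; auto|].
    apply Derive_correct, A. }
  split; [exists (ln l); apply is_lim_ln_fin; auto|]. split; [|split].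
  - eapply filter_imp; [|exact (filter_and _ _ H2 Hpos)]. intros x [A B].
    apply ex_derive_comp; auto; eexists; apply is_derive_ln; auto.
  - apply (is_lim_ext_loc _ _ p_infty _ E).
    replace (Finite 0) with (Finite (0 * / l)) by (f_equal; ring).
    apply is_lim_mult_fin; auto; apply is_lim_inv_fin; auto; lra.
  - apply flat_ext with (1 := E), flat_mult; auto.
    apply flat_inv with l; auto; lra.
Qed.

Lemma flat_exp n p :
  is_lim p p_infty m_infty -> at_top (fun x => ex_derive p x) ->
  flat n (Derive p) -> flat n (fun x => exp (p x)).
Proof.
  intros Hm Hd; pose proof (is_lim_exp_m_infty p Hm) as L0.
  induction n as [|n IH]; intros Hp; [split; [exists 0; auto | exact I]|].
  pose proof (flat_S _ _ Hp) as Hp'; destruct Hp as ([l Hl] & _).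
  assert (E : at_top (fun x => exp (p x) * Derive p x = Derive (fun x => exp (p x)) x)).
  { eapply filter_imp; [|exact Hd]. intros x A; symmetry; apply is_derive_unique.
    rewrite Rmult_comm; apply (is_derive_comp exp p x); [apply is_derive_exp | apply Derive_correct, A]. }
  split; [exists 0; auto|]. split; [|split].
  - eapply filter_imp; [|exact Hd]. intros x A; apply ex_derive_comp; auto; eexists; apply is_derive_exp.
  - apply (is_lim_ext_loc _ _ p_infty _ E).
    replace (Finite 0) with (Finite (0 * l)) by (f_equal; ring). apply is_lim_mult_fin; auto.
  - apply flat_ext with (1 := E), flat_mult; auto.
Qed.

Lemma flat_comp n p q :
  is_lim q p_infty p_infty -> at_top (fun x => ex_derive q x) ->
  flat n p -> flat (pred n) (Derive q) -> flat n (fun x => p (q x)).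
Proof.
  intros Hq Hd; revert p; induction n as [|n IH]; intros p Hp Hq'.
  - destruct Hp as [[l Hl] _]; split; [exists l; apply is_lim_comp_p_infty; auto | exact I].
  - destruct Hp as ([l H1] & H2 & H3 & H4).
    assert (Ep : at_top (fun x => ex_derive p (q x))) by exact (at_top_comp q _ Hq H2).
    assert (E : at_top (fun x => Derive q x * Derive p (q x) = Derive (fun x => p (q x)) x)).
    { eapply filter_imp; [|exact (filter_and _ _ Hd Ep)]. intros x [A B].
      rewrite (Derive_comp p q x); auto. }
    split; [exists l; apply is_lim_comp_p_infty; auto|]. split; [|split].
    + eapply filter_imp; [|exact (filter_and _ _ Hd Ep)]. intros x [A B]; apply ex_derive_comp; auto.
    + apply (is_lim_ext_loc _ _ p_infty _ E). destruct (flat_lim _ _ Hq') as [l' Hl'].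
      replace (Finite 0) with (Finite (l' * 0)) by (f_equal; ring).
      apply is_lim_mult_fin; auto; apply is_lim_comp_p_infty; auto.
    + apply flat_ext with (1 := E), flat_mult; auto.
      apply IH; auto. destruct n; [exact (conj (flat_lim _ _ Hq') I) | apply flat_S, Hq'].
Qed.

Lemma is_lim_Rinv_p_infty : is_lim Rinv p_infty 0.
Proof. apply (is_lim_inv (fun x => x) p_infty p_infty); [apply is_lim_id | discriminate]. Qed.

Lemma flat_Rinv n : flat n Rinv.
Proof.
  pose proof is_lim_Rinv_p_infty as L.
  induction n as [|n IH]; (split; [exists 0; exact L|]); [exact I|].
  assert (E : at_top (fun x => (-1) * (/ x * / x) = Derive Rinv x)).
  { exists 0; intros x Hx; symmetry; apply is_derive_unique; auto_derive; [lra | field; lra]. }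
  split; [|split].
  - exists 0; intros x Hx; auto_derive; lra.
  - apply (is_lim_ext_loc _ _ p_infty _ E).
    replace (Finite 0) with (Finite ((-1) * (0 * 0))) by (f_equal; ring).
    apply is_lim_mult_fin; [apply is_lim_const | apply is_lim_mult_fin; exact L].
  - apply flat_ext with (1 := E), flat_mult; [apply flat_const | apply flat_mult; exact IH].
Qed.

Lemma flat_is_lim_Derive_n n p j : flat n p -> (1 <= j <= n)%nat -> is_lim (Derive_n p j) p_infty 0.
Proof.
  revert p j; induction n as [|n IH]; intros p j Hp Hj; [lia|].
  destruct Hp as (_ & _ & H3 & H4).
  destruct j as [|[|j]]; [lia | exact H3|].
  apply is_lim_ext with (Derive_n (Derive p) (S j)); [intros; apply Derive_n_Derive|].
  apply IH; auto; lia.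
Qed.

Lemma flat_Derive_of_lims a p (l : R) :
  smooth_on a p -> is_lim (Derive p) p_infty l ->
  (forall m, (2 <= m)%nat -> is_lim (Derive_n p m) p_infty 0) ->
  forall n, flat n (Derive p).
Proof.
  intros Hs Hl Hm n.
  assert (G : forall n j, (1 <= j)%nat -> flat n (Derive_n p j)).
  { clear n; induction n as [|n IH]; intros j Hj;
      (split; [destruct j as [|[|j]]; [lia | exists l; exact Hl | exists 0; apply Hm; lia]|]).
    - exact I.
    - split; [|split].
      + exists a; intros x Hx; apply (smooth_on_ex_derive_Derive_n a); auto.
      + apply (Hm (S j)); lia.
      + apply (IH (S j)); lia. }
  apply (G n 1%nat); lia.
Qed.

Lemma continuity_pt_of_ex_derive (p : R -> R) x : ex_derive p x -> continuity_pt p x.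
Proof.
  intros H; apply continuity_pt_filterlim.
  apply (ex_derive_continuous (K := R_AbsRing) (V := R_NormedModule)), H.
Qed.

Lemma mvt_between (p : R -> R) a b :
  (forall y, Rmin a b <= y <= Rmax a b -> ex_derive p y) ->
  exists c, Rmin a b <= c <= Rmax a b /\ p b - p a = Derive p c * (b - a).
Proof.
  intros H; apply MVT_gen.
  - intros x Hx; apply Derive_correct, H; lra.
  - intros x Hx; apply continuity_pt_of_ex_derive, H, Hx.
Qed.

Lemma cauchy_mvt_between (p q : R -> R) a b :
  (forall y, Rmin a b <= y <= Rmax a b -> ex_derive p y /\ ex_derive q y) ->
  exists c, Rmin a b <= c <= Rmax a b /\ (p b - p a) * Derive q c = (q b - q a) * Derive p c.
Proof.
  intros H.
  destruct (MVT_gen (fun x => p x * (q b - q a) - q x * (p b - p a)) a b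
              (fun x => Derive p x * (q b - q a) - Derive q x * (p b - p a))) as [c [Hc E]].
  - intros y Hy; destruct (H y ltac:(lra)) as [Hp Hq].
    auto_derive; auto. change (fun x => p x) with p; change (fun x => q x) with q; ring.
  - intros y Hy; destruct (H y Hy) as [Hp Hq].
    apply continuity_pt_of_ex_derive; auto_derive; auto.
  - exists c; split; auto.
    destruct (Req_dec a b) as [<-|Hab]; [ring|].
    apply Rmult_eq_reg_r with (b - a); lra.
Qed.

Lemma Rabs_increment_le (p : R -> R) a b B :
  (forall y, Rmin a b <= y <= Rmax a b -> ex_derive p y /\ Rabs (Derive p y) <= B) ->
  Rabs (p b - p a) <= B * Rabs (b - a).
Proof.
  intros H; destruct (mvt_between p a b) as [c [Hc E]]; [intros; apply H; auto|].
  rewrite E, Rabs_mult; apply Rmult_le_compat_r; [apply Rabs_pos | apply H, Hc].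
Qed.

Lemma increment_ge (p : R -> R) t c x y :
  (forall v, t < v -> ex_derive p v /\ c <= Derive p v) -> t < x -> x <= y ->
  c * (y - x) <= p y - p x.
Proof.
  intros H Hx Hxy; destruct (mvt_between p x y) as [z [Hz E]].
  - rewrite Rmin_left, Rmax_right by lra; intros v Hv; apply H; lra.
  - rewrite Rmin_left, Rmax_right in Hz by lra.
    rewrite E; apply Rmult_le_compat_r; [lra | apply H; lra].
Qed.

Lemma Rabs_increment_ge (p : R -> R) t c x y :
  0 <= c -> (forall v, t < v -> ex_derive p v /\ c <= Derive p v) -> t < x -> t < y ->
  c * Rabs (y - x) <= Rabs (p y - p x).
Proof.
  intros Hc H Hx Hy; destruct (Rle_or_lt x y) as [C|C].
  - pose proof (increment_ge p t c x y H Hx C).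
    assert (0 <= c * (y - x)) by (apply Rmult_le_pos; lra).
    rewrite !Rabs_right; lra.
  - pose proof (increment_ge p t c y x H Hy (Rlt_le _ _ C)).
    assert (0 <= c * (x - y)) by (apply Rmult_le_pos; lra).
    rewrite Rabs_left, Rabs_left1; lra.
Qed.

Lemma is_lim_p_infty_of_Derive_ge (p : R -> R) c :
  0 < c -> at_top (fun x => ex_derive p x /\ c <= Derive p x) -> is_lim p p_infty p_infty.
Proof.
  intros Hc [M HM]; apply is_lim_spec; intros K.
  exists (Rmax (M + 1) (M + 1 + (K - p (M + 1)) / c)); intros x Hx.
  pose proof (Rmax_l (M + 1) (M + 1 + (K - p (M + 1)) / c)) as H1.
  pose proof (Rmax_r (M + 1) (M + 1 + (K - p (M + 1)) / c)) as H2.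
  pose proof (increment_ge p M c (M + 1) x HM ltac:(lra) ltac:(lra)).
  assert (K - p (M + 1) < c * (x - (M + 1))).
  { apply Rmult_lt_reg_l with (/ c); [apply Rinv_0_lt_compat; auto|].
    rewrite <- Rmult_assoc, Rinv_l, Rmult_1_l by lra; unfold Rdiv in H2; lra. }
  lra.
Qed.

Lemma is_lim_m_infty_of_Derive_le (p : R -> R) c :
  c < 0 -> at_top (fun x => ex_derive p x /\ Derive p x <= c) -> is_lim p p_infty m_infty.
Proof.
  intros Hc H.
  assert (L : is_lim (fun x => - p x) p_infty p_infty).
  { apply is_lim_p_infty_of_Derive_ge with (- c); [lra|].
    eapply filter_imp; [|exact H]; intros x [A B]; split.
    - auto_derive; auto.
    - rewrite Derive_opp; lra. }
  apply is_lim_opp in L; apply is_lim_ext with (2 := L); intros; ring.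
Qed.

Lemma Rabs_sub_between u u' z : Rmin u u' <= z <= Rmax u u' -> Rabs (z - u) <= Rabs (u' - u).
Proof. unfold Rmin, Rmax; destruct (Rle_dec u u'); intros; unfold Rabs; repeat destruct Rcase_abs; lra. Qed.

Lemma exp_mul_near_one d r : Rabs d <= 1 -> Rabs (exp d * r - 1) <= 3 * Rabs d + 3 * Rabs (r - 1).
Proof.
  intros Hd; apply Rabs_le_between in Hd.
  assert (He : forall y, Rmin 0 d <= y <= Rmax 0 d -> exp y <= 3).
  { intros y Hy; apply Rle_trans with (exp 1); [|apply exp_le_3].
    assert (Hy1 : y <= 1) by (unfold Rmin, Rmax in Hy; destruct (Rle_dec 0 d); lra).
    destruct (Rle_lt_or_eq_dec _ _ Hy1) as [C|C]; [left; apply exp_increasing, C | rewrite C; lra]. }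
  assert (H1 : Rabs (exp d - exp 0) <= 3 * Rabs (d - 0)).
  { apply Rabs_increment_le; intros y Hy; split; [eexists; apply is_derive_exp|].
    rewrite (is_derive_unique exp y (exp y)) by apply is_derive_exp.
    rewrite Rabs_right by (left; apply exp_pos); apply He, Hy. }
  rewrite exp_0, Rminus_0_r in H1.
  assert (H2 : exp d <= 3) by (apply He; unfold Rmin, Rmax; destruct (Rle_dec 0 d); lra).
  replace (exp d * r - 1) with (exp d * (r - 1) + (exp d - 1)) by ring.
  eapply Rle_trans; [apply Rabs_triang|]; rewrite Rabs_mult, (Rabs_right (exp d)) by (left; apply exp_pos).
  assert (exp d * Rabs (r - 1) <= 3 * Rabs (r - 1)) by (apply Rmult_le_compat_r; [apply Rabs_pos | exact H2]).
  lra.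
Qed.

(** * Inverses of functions with derivative bounded below *)

(* Unspecified when [w] has no preimage above [t]. *)
Definition inverse_above (t : R) (phi : R -> R) (w : R) : R :=
  epsilon (inhabits 0) (fun v => t < v /\ phi v = w).

Section InverseAbove.

Variables (phi : R -> R) (t c : R).
Hypotheses (Hc : 0 < c) (Hsmooth : smooth_on t phi) (Hder : forall v, t < v -> c <= Derive phi v).

Local Notation psi := (inverse_above t phi).

Let Hphi : forall v, t < v -> ex_derive phi v /\ c <= Derive phi v.
Proof. intros v Hv; split; [apply (smooth_on_ex_derive t) | apply Hder]; auto. Qed.

Let psi_spec w : (exists v, t < v /\ phi v = w) -> t < psi w /\ phi (psi w) = w.
Proof. exact (epsilon_spec (inhabits 0) (fun v => t < v /\ phi v = w)). Qed.

Lemma inverse_above_phi v : t < v -> psi (phi v) = v.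
Proof.
  intros Hv; destruct (psi_spec (phi v) (ex_intro _ v (conj Hv eq_refl))) as [H1 H2].
  pose proof (Rabs_increment_ge phi t c v (psi (phi v)) (Rlt_le _ _ Hc) Hphi Hv H1) as H.
  rewrite H2, Rminus_diag, Rabs_R0 in H.
  assert (E : Rabs (psi (phi v) - v) <= 0) by (apply Rmult_le_reg_l with c; lra).
  apply Rabs_le_between in E; lra.
Qed.

(* The margin [t + 1] keeps the intermediate value theorem inside the open half-line
   where [phi] is known to be continuous. *)
Lemma inverse_above_spec w : phi (t + 1) < w -> t + 1 < psi w /\ phi (psi w) = w.
Proof.
  intros Hw.
  set (b := t + 1 + (w - phi (t + 1)) / c + 1).
  assert (Hb : t + 1 < b) by (unfold b; assert (0 < (w - phi (t + 1)) / c) by (apply Rdiv_lt_0_compat; lra); lra).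
  assert (Hpb : w < phi b).
  { pose proof (increment_ge phi t c (t + 1) b Hphi ltac:(lra) ltac:(lra)).
    assert (c * (b - (t + 1)) = w - phi (t + 1) + c) by (unfold b; field; lra). lra. }
  destruct (Ranalysis5.IVT_interv (fun v => phi v - w) (t + 1) b) as [v [Hv E]]; auto; try (simpl; lra).
  { intros u Hu; apply continuity_pt_of_ex_derive; auto_derive; apply Hphi; lra. }
  destruct (psi_spec w) as [H1 H2]; [exists v; split; [lra | simpl in E; lra] | split; auto].
  destruct (Rle_or_lt (psi w) (t + 1)) as [C|C]; auto.
  pose proof (increment_ge phi t c (psi w) (t + 1) Hphi H1 C).
  assert (0 <= c * (t + 1 - psi w)) by (apply Rmult_le_pos; lra). lra.
Qed.

Lemma inverse_above_le w w' : phi (t + 1) < w -> w <= w' -> psi w <= psi w'.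
Proof.
  intros Hw Hww; destruct (inverse_above_spec w Hw) as [A B], (inverse_above_spec w' ltac:(lra)) as [A' B'].
  destruct (Rle_or_lt (psi w) (psi w')) as [C|C]; auto.
  pose proof (increment_ge phi t c (psi w') (psi w) Hphi ltac:(lra) (Rlt_le _ _ C)).
  assert (0 < c * (psi w - psi w')) by (apply Rmult_lt_0_compat; lra). lra.
Qed.

Lemma inverse_above_lipschitz w w' :
  phi (t + 1) < w -> phi (t + 1) < w' -> c * Rabs (psi w' - psi w) <= Rabs (w' - w).
Proof.
  intros Hw Hw'; destruct (inverse_above_spec w Hw) as [A B], (inverse_above_spec w' Hw') as [A' B'].
  rewrite <- B, <- B' at 2; apply (Rabs_increment_ge phi t); auto; lra.
Qed.

Lemma inverse_above_continuity_pt w : phi (t + 1) < w -> continuity_pt psi w.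
Proof.
  intros Hw eps Heps; exists (Rmin (c * eps) (w - phi (t + 1))); split.
  { apply Rmin_pos; [apply Rmult_lt_0_compat|]; lra. }
  intros w' [_ Hw']; simpl in *; unfold R_dist in *.
  pose proof (Rmin_l (c * eps) (w - phi (t + 1))); pose proof (Rmin_r (c * eps) (w - phi (t + 1))).
  assert (Hw'' : phi (t + 1) < w') by (apply Rabs_def2 in Hw'; lra).
  pose proof (inverse_above_lipschitz w w' Hw Hw'').
  apply Rmult_lt_reg_l with c; lra.
Qed.

Lemma is_derive_inverse_above w : phi (t + 1) < w -> is_derive psi w (/ Derive phi (psi w)).
Proof.
  intros Hw; set (lb := (phi (t + 1) + w) / 2); set (ub := w + 1).
  assert (Hlb : phi (t + 1) < lb) by (unfold lb; lra).
  assert (Prf : forall u, psi lb <= u <= psi ub -> derivable_pt phi u).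
  { intros u Hu; apply ex_derive_Reals_0, Hphi; destruct (inverse_above_spec lb Hlb); lra. }
  assert (Pi : psi lb <= psi w <= psi ub) by (split; apply inverse_above_le; unfold lb, ub in *; lra).
  apply is_derive_Reals.
  pose proof (Ranalysis5.derivable_pt_lim_recip_interv phi psi lb ub w Prf
    (inverse_above_continuity_pt w Hw) ltac:(unfold lb, ub; lra) ltac:(unfold lb, ub; lra) Pi) as D.
  rewrite Derive_Reals in D; replace (/ Derive phi (psi w)) with (1 / Derive phi (psi w)) by (unfold Rdiv; ring).
  apply D.
  - intros x Hx; unfold comp, id; apply inverse_above_spec; unfold lb in *; lra.
  - destruct (inverse_above_spec w Hw); pose proof (Hder (psi w) ltac:(lra)); lra.
Qed.

Lemma inverse_above_smooth : smooth_on (phi (t + 1)) psi.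
Proof.
  assert (Sinv : smooth_on t (fun v => / Derive phi v)).
  { intros n; apply diff_on_comp with 0; [apply diff_on_Rinv | apply smooth_on_Derive, Hsmooth|].
    intros v Hv; pose proof (Hder v Hv); lra. }
  intros n; induction n as [|n IH]; simpl; auto; split.
  - intros w Hw; eexists; apply is_derive_inverse_above, Hw.
  - apply diff_on_ext with (fun w => / Derive phi (psi w)).
    + intros w Hw; symmetry; apply is_derive_unique, is_derive_inverse_above, Hw.
    + apply (diff_on_comp n (phi (t + 1)) t (fun v => / Derive phi v) psi); [apply Sinv | exact IH|].
      intros w Hw; destruct (inverse_above_spec w Hw); lra.
Qed.

Lemma inverse_above_to_infty : is_lim psi p_infty p_infty.
Proof.
  apply is_lim_spec; intros K; set (K' := Rmax K (t + 1) + 1).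
  exists (Rmax (phi (t + 1)) (phi K')); intros w Hw.
  pose proof (Rmax_l (phi (t + 1)) (phi K')); pose proof (Rmax_r (phi (t + 1)) (phi K')).
  pose proof (Rmax_l K (t + 1)); pose proof (Rmax_r K (t + 1)).
  destruct (inverse_above_spec w ltac:(lra)) as [A B].
  destruct (Rle_or_lt (psi w) K') as [C|C]; [|unfold K' in C; lra].
  pose proof (increment_ge phi t c (psi w) K' Hphi ltac:(lra) C).
  assert (0 <= c * (K' - psi w)) by (apply Rmult_le_pos; lra). lra.
Qed.

Lemma inverse_above_Derive_flat (l : R) :
  0 < l -> (forall n, flat n (Derive phi)) -> is_lim (Derive phi) p_infty l ->
  (forall n, flat n (Derive psi)) /\ is_lim (Derive psi) p_infty (/ l).
Proof.
  intros Hl Hflat Hlim.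
  assert (E : at_top (fun w => / Derive phi (psi w) = Derive psi w)).
  { exists (phi (t + 1)); intros w Hw; symmetry; apply is_derive_unique, is_derive_inverse_above, Hw. }
  assert (Hinv : forall n, flat n (fun v => / Derive phi v)).
  { intros n; apply flat_inv with l; auto; lra. }
  split.
  - intros n; induction n as [|n IH].
    + split; [exists (/ l) | exact I].
      apply (is_lim_ext_loc _ _ p_infty _ E), (is_lim_comp_p_infty (fun v => / Derive phi v) psi);
        [apply is_lim_inv_fin; auto; lra | apply inverse_above_to_infty].
    + apply flat_ext with (1 := E), (flat_comp (S n) (fun v => / Derive phi v) psi); auto;
        [apply inverse_above_to_infty|].
      exists (phi (t + 1)); intros w Hw; eexists; apply is_derive_inverse_above, Hw.
  - apply (is_lim_ext_loc _ _ p_infty _ E), (is_lim_comp_p_infty (fun v => / Derive phi v) psi);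
      [apply is_lim_inv_fin; auto; lra | apply inverse_above_to_infty].
Qed.

End InverseAbove.

(** * Smoothly regularly varying functions *)

Definition hlog (p : R -> R) (v : R) : R := ln (p (exp v)).

Lemma exp_hlog p v : 0 < p (exp v) -> exp (hlog p v) = p (exp v).
Proof. intros H; apply exp_ln, H. Qed.

Lemma lt_ln_of_exp_lt c x : exp c < x -> c < ln x.
Proof. intros H; rewrite <- (ln_exp c); apply ln_increasing; [apply exp_pos | exact H]. Qed.

Lemma at_top_exp (P : R -> Prop) : at_top P -> at_top (fun v => P (exp v)).
Proof. exact (at_top_comp exp P is_lim_exp_p). Qed.

Section SmoothlyRegular.

Variables (c : R) (p : R -> R).
Hypothesis Hp : SR c p.

Lemma SR_eventually_pos : at_top (fun x => 0 < p x).
Proof.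
  destruct Hp as [z [_ [[M HM] _]]]; exists (Rmax z M); intros x Hx.
  pose proof (Rmax_l z M); pose proof (Rmax_r z M).
  destruct (Rle_or_lt (p x) 0) as [C|C]; auto.
  specialize (HM x ltac:(lra) C); lra.
Qed.

Lemma SR_hlog_smooth : at_top (fun t => smooth_on t (hlog p)).
Proof.
  destruct Hp as [z [Hs _]]; apply smooth_on_iff in Hs.
  eapply filter_imp; [|exact (at_top_forall_gt _
    (at_top_exp _ (filter_and _ _ (at_top_gt z) SR_eventually_pos)))].
  intros t Ht n; cbv beta in Ht; unfold hlog.
  apply diff_on_comp with 0; [apply diff_on_ln | |intros; apply Ht; auto].
  apply diff_on_comp with z; [apply Hs | apply diff_on_exp | intros; apply Ht; auto].
Qed.

Lemma SR_Derive_hlog_lim : is_lim (Derive (hlog p)) p_infty c.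
Proof. destruct Hp as [z [_ [_ [Hl _]]]]; exact Hl. Qed.

Lemma SR_Derive_hlog_flat n : flat n (Derive (hlog p)).
Proof.
  destruct (filter_ex _ SR_hlog_smooth) as [t Ht].
  destruct Hp as [z [_ [_ [Hl Hm]]]]; exact (flat_Derive_of_lims t _ c Ht Hl Hm n).
Qed.

Lemma SR_elasticity : at_top (fun v => exp v * Derive p (exp v) = p (exp v) * Derive (hlog p) v).
Proof.
  destruct Hp as [z [Hs _]]; apply smooth_on_iff in Hs.
  eapply filter_imp; [|exact (at_top_exp _ (filter_and _ _ (at_top_gt z) SR_eventually_pos))].
  intros v [Hz Hpos]; unfold hlog.
  rewrite (Derive_comp (fun x => ln (p x)) exp v), (Derive_comp ln p (exp v)).
  - rewrite (is_derive_unique ln _ (/ p (exp v))) by (apply is_derive_ln; auto).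
    rewrite (is_derive_unique exp _ (exp v)) by apply is_derive_exp.
    field; lra.
  - eexists; apply is_derive_ln; auto.
  - apply (smooth_on_ex_derive z); auto.
  - apply ex_derive_comp; [eexists; apply is_derive_ln; auto | apply (smooth_on_ex_derive z); auto].
  - eexists; apply is_derive_exp.
Qed.

End SmoothlyRegular.

Lemma SR_on_of_hlog z (c : R) p q :
  smooth_on z p -> (forall x, z < x -> 0 < p x) -> at_top (fun u => hlog p u = q u) ->
  (forall n, flat n (Derive q)) -> is_lim (Derive q) p_infty c -> SR_on z c p.
Proof.
  intros Hs Hpos E Hflat Hlim.
  assert (En : forall m, at_top (fun u => Derive_n q m u = Derive_n (hlog p) m u)).
  { intros m; destruct E as [M HM]; exists M; intros x Hx.
    apply Derive_n_ext_loc, (locally_of_gt _ M); auto; intros; symmetry; auto. }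
  split; [apply smooth_on_iff, Hs|]. split.
  { exists z; intros x Hx Hx'; specialize (Hpos x Hx); lra. }
  split.
  - exact (is_lim_ext_loc _ _ p_infty _ (En 1%nat) Hlim).
  - intros [|m] Hm; [lia|]. apply (is_lim_ext_loc _ _ p_infty _ (En (S m))).
    apply is_lim_ext with (Derive_n (Derive q) m); [intros; apply Derive_n_Derive|].
    apply flat_is_lim_Derive_n with m; auto; lia.
Qed.

Lemma ln_le_ln x y : 0 < x -> x <= y -> ln x <= ln y.
Proof. intros Hx [E|E]; [left; apply ln_increasing; auto | subst; lra]. Qed.

Lemma Rabs_ln_increment_le m x x' :
  0 < m -> m <= x -> m <= x' -> Rabs (ln x' - ln x) <= / m * Rabs (x' - x).
Proof.
  intros Hm Hx Hx'; apply Rabs_increment_le; intros y Hy.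
  assert (Hym : m <= y) by (unfold Rmin in Hy; destruct (Rle_dec x x'); lra).
  split; [eexists; apply is_derive_ln; lra|].
  rewrite (is_derive_unique ln y (/ y)) by (apply is_derive_ln; lra).
  rewrite Rabs_right by (left; apply Rinv_0_lt_compat; lra); apply Rinv_le_contravar; lra.
Qed.

Lemma Rpower_range_ln γ l y :
  Rpower l (- γ) <= y <= Rpower l γ -> 0 < y /\ Rabs (ln y) <= γ * ln l.
Proof.
  unfold Rpower; intros [H1 H2]; pose proof (exp_pos (- γ * ln l)) as Hpos.
  split; [lra|]; apply Rabs_le; split.
  - replace (- (γ * ln l)) with (ln (exp (- γ * ln l))) by (rewrite ln_exp; ring).
    apply ln_le_ln; auto.
  - rewrite <- (ln_exp (γ * ln l)); apply ln_le_ln; lra.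
Qed.

Lemma lnln_le_ln γ e : 0 < γ -> 0 < e -> at_top (fun L => 1 < ln L /\ γ * ln (ln L) <= e * ln L).
Proof.
  intros Hg He.
  pose proof (is_lim_at_top_near _ _ (e / γ) is_lim_div_ln_p ltac:(apply Rdiv_lt_0_compat; auto)) as H.
  apply (at_top_comp ln) in H; [|apply is_lim_ln_p].
  pose proof (at_top_comp ln _ is_lim_ln_p (at_top_gt 1)) as H1.
  eapply filter_imp; [|exact (filter_and _ _ H1 H)].
  intros L [HL Hr]; split; auto; cbv beta in Hr.
  rewrite Rminus_0_r in Hr; apply Rabs_def2 in Hr; destruct Hr as [Hr _].
  apply Rmult_le_reg_l with (/ γ); [apply Rinv_0_lt_compat; auto|].
  replace (/ γ * (γ * ln (ln L))) with (ln (ln L) / ln L * ln L) by (field; lra).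
  replace (/ γ * (e * ln L)) with (e / γ * ln L) by (field; lra).
  apply Rmult_le_compat_r; lra.
Qed.

Lemma at_top_range_scale γ (P : R -> Prop) : 0 < γ -> at_top P ->
  at_top (fun L => forall y, Rpower (ln L) (- γ) <= y <= Rpower (ln L) γ -> P (y * L)).
Proof.
  intros Hg [M HM].
  pose proof (lnln_le_ln γ (1 / 2) Hg ltac:(lra)) as Hl.
  pose proof (at_top_comp ln _ is_lim_ln_p (at_top_gt (2 * ln (Rmax M 1)))) as HM'.
  eapply filter_imp; [|exact (filter_and _ _ (at_top_gt 0) (filter_and _ _ Hl HM'))].
  intros L [HL0 [[HL Hl'] HM'']]; cbv beta in HM''; intros y Hy.
  destruct (Rpower_range_ln γ (ln L) y Hy) as [Hy0 Hly].
  apply HM; apply Rle_lt_trans with (Rmax M 1); [apply Rmax_l|].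
  apply ln_lt_inv; [pose proof (Rmax_r M 1); lra | apply Rmult_lt_0_compat; auto|].
  rewrite ln_mult by auto; apply Rabs_le_between in Hly; lra.
Qed.

(** * The equation x f'(x) - f(x) + k(x) = ln L *)

Lemma exp_minus x y : exp (x - y) = exp x / exp y.
Proof. unfold Rminus, Rdiv; rewrite exp_plus, exp_Ropp; reflexivity. Qed.

Definition lhs (f k : R -> R) (x : R) : R := x * Derive f x - f x + k x.

(* [lhs f k (exp v) / f (exp v)] written through [hlog], see [lhs_exp_facts]. *)
Definition lhs_ratio (f k : R -> R) (v : R) : R :=
  Derive (hlog f) v - 1 + exp (hlog k v - hlog f v).

Definition Phi (f k : R -> R) (v : R) : R := ln (lhs f k (exp v)).

Lemma exp_Phi f k v : 0 < lhs f k (exp v) -> exp (Phi f k v) = lhs f k (exp v).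
Proof. intros H; apply exp_ln, H. Qed.

Definition gsol (f k : R -> R) (t L : R) : R := exp (inverse_above t (Phi f k) (ln (ln L))).

Definition gsol_radius (f k : R -> R) (t : R) : R := exp (exp (Phi f k (t + 1))).

Section Equation.

Variables (a b : R) (f k : R -> R).
Hypotheses (Ha : 1 < a) (Hba : b < a) (Hf : SR a f) (Hk : SR b k).

Lemma hlog_smooth_both : at_top (fun t => smooth_on t (hlog f) /\ smooth_on t (hlog k)).
Proof. exact (filter_and _ _ (SR_hlog_smooth a f Hf) (SR_hlog_smooth b k Hk)). Qed.

Lemma hlog_diff_to_m_infty : is_lim (fun v => hlog k v - hlog f v) p_infty m_infty.
Proof.
  destruct (filter_ex _ hlog_smooth_both) as [t [Sf Sk]].
  apply (is_lim_m_infty_of_Derive_le _ ((b - a) / 2)); [lra|].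
  eapply filter_imp; [|exact (filter_and _ _ (at_top_gt t) (is_lim_at_top_lt _ _ ((b - a) / 2)
    (is_lim_minus' _ _ p_infty b a (SR_Derive_hlog_lim b k Hk) (SR_Derive_hlog_lim a f Hf)) ltac:(lra)))].
  intros v [Hv Hd]; cbv beta in Hd.
  assert (Ef : ex_derive (hlog f) v) by (apply (smooth_on_ex_derive t); auto).
  assert (Ek : ex_derive (hlog k) v) by (apply (smooth_on_ex_derive t); auto).
  split; [auto_derive; auto|]. rewrite Derive_minus; auto; lra.
Qed.

Lemma lhs_ratio_lim : is_lim (lhs_ratio f k) p_infty (a - 1).
Proof.
  replace (a - 1) with (a - 1 + 0) by ring.
  apply is_lim_plus'; [apply is_lim_minus'; [apply (SR_Derive_hlog_lim a f Hf) | apply is_lim_const]|].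
  apply is_lim_exp_m_infty, hlog_diff_to_m_infty.
Qed.

Lemma lhs_ratio_flat n : flat n (lhs_ratio f k).
Proof.
  destruct (filter_ex _ hlog_smooth_both) as [t [Sf Sk]].
  apply flat_plus; [apply flat_minus; [apply (SR_Derive_hlog_flat a f Hf) | apply flat_const]|].
  apply flat_exp; [apply hlog_diff_to_m_infty | exists t; intros v Hv; auto_derive;
    repeat split; apply (smooth_on_ex_derive t); auto|].
  apply flat_ext with (fun v => Derive (hlog k) v - Derive (hlog f) v).
  - exists t; intros v Hv; rewrite Derive_minus; auto; apply (smooth_on_ex_derive t); auto.
  - apply flat_minus; [apply (SR_Derive_hlog_flat b k Hk) | apply (SR_Derive_hlog_flat a f Hf)].
Qed.

Lemma lhs_exp_facts : at_top (fun v =>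
  0 < f (exp v) /\ 0 < lhs_ratio f k v /\
  exp v * Derive f (exp v) = f (exp v) * Derive (hlog f) v /\
  lhs f k (exp v) = f (exp v) * lhs_ratio f k v).
Proof.
  pose proof (is_lim_at_top_gt _ _ 0 lhs_ratio_lim ltac:(lra)) as Hr.
  eapply filter_imp; [|exact (filter_and _ _ (filter_and _ _ (SR_elasticity a f Hf) Hr)
    (at_top_exp _ (filter_and _ _ (SR_eventually_pos a f Hf) (SR_eventually_pos b k Hk))))].
  intros v [[E Hrv] [Pf Pk]]; repeat split; auto.
  unfold lhs, lhs_ratio; rewrite E, exp_minus, !exp_hlog by auto; field; lra.
Qed.

Lemma Phi_eq : at_top (fun v => Phi f k v = hlog f v + ln (lhs_ratio f k v)).
Proof.
  eapply filter_imp; [|exact lhs_exp_facts].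
  intros v (Pf & Pr & _ & E); unfold Phi, hlog; rewrite E, ln_mult; auto.
Qed.

Lemma Phi_decomposition : at_top (fun t =>
  smooth_on t (hlog f) /\ smooth_on t (fun v => ln (lhs_ratio f k v)) /\
  forall v, t < v -> Phi f k v = hlog f v + ln (lhs_ratio f k v)).
Proof.
  destruct (filter_ex _ hlog_smooth_both) as [t0 [Sf Sk]].
  eapply filter_imp; [|exact (filter_and _ _ (at_top_gt t0) (at_top_forall_gt _
    (filter_and _ _ Phi_eq (is_lim_at_top_gt _ _ 0 lhs_ratio_lim ltac:(lra)))))].
  intros t [Ht H]; cbv beta in H; split; [|split].
  - apply smooth_on_mono with t0; auto; lra.
  - intros n; apply diff_on_comp with 0; [apply diff_on_ln | | intros; apply H; auto].
    unfold lhs_ratio; apply diff_on_mono with t0; [lra|].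
    apply diff_on_plus; [apply diff_on_minus; [apply smooth_on_Derive, Sf | apply diff_on_const]|].
    apply diff_on_exp_comp, diff_on_minus; auto.
  - intros v Hv; apply H, Hv.
Qed.

Lemma Phi_smooth : at_top (fun t => smooth_on t (Phi f k)).
Proof.
  eapply filter_imp; [|exact Phi_decomposition].
  intros t (Sf & Sr & E) n; apply diff_on_ext with (fun v => hlog f v + ln (lhs_ratio f k v)).
  - intros v Hv; symmetry; apply E, Hv.
  - apply diff_on_plus; auto.
Qed.

Lemma Derive_Phi_eq : at_top (fun v =>
  Derive (Phi f k) v = Derive (hlog f) v + Derive (fun w => ln (lhs_ratio f k w)) v).
Proof.
  destruct Phi_decomposition as [t Ht]; destruct (Ht (t + 1) ltac:(lra)) as (Sf & Sr & E).
  exists (t + 1); intros v Hv.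
  rewrite <- Derive_plus; [|apply (smooth_on_ex_derive (t + 1)); auto ..].
  apply Derive_ext_loc, (locally_of_gt _ (t + 1)); auto.
Qed.

Lemma Derive_Phi_flat n : flat n (Derive (Phi f k)).
Proof.
  apply flat_ext with (fun v => Derive (hlog f) v + Derive (fun w => ln (lhs_ratio f k w)) v).
  - eapply filter_imp; [|exact Derive_Phi_eq]; intros v E; symmetry; exact E.
  - apply flat_plus; [apply (SR_Derive_hlog_flat a f Hf)|].
    exact (proj2 (proj2 (proj2 (flat_ln (S n) _ (a - 1) lhs_ratio_lim ltac:(lra) (lhs_ratio_flat (S n)))))).
Qed.

Lemma Derive_Phi_lim : is_lim (Derive (Phi f k)) p_infty a.
Proof.
  apply (is_lim_ext_loc (fun v => Derive (hlog f) v + Derive (fun w => ln (lhs_ratio f k w)) v)).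
  - eapply filter_imp; [|exact Derive_Phi_eq]; intros v E; symmetry; exact E.
  - replace (Finite a) with (Finite (a + 0)) by (f_equal; ring).
    apply is_lim_plus'; [apply (SR_Derive_hlog_lim a f Hf)|].
    exact (proj1 (proj2 (proj2 (flat_ln 1 _ (a - 1) lhs_ratio_lim ltac:(lra) (lhs_ratio_flat 1))))).
Qed.

Lemma eventually_solvable : at_top (fun t =>
  smooth_on t (Phi f k) /\ forall v, t < v -> a / 2 <= Derive (Phi f k) v /\ 0 < lhs f k (exp v)).
Proof.
  apply (filter_and _ _ Phi_smooth), at_top_forall_gt.
  eapply filter_imp; [|exact (filter_and _ _ lhs_exp_facts
    (is_lim_at_top_gt _ _ (a / 2) Derive_Phi_lim ltac:(lra)))].
  intros v [(Pf & Pr & _ & E) D]; split; [cbv beta in D; lra|].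
  rewrite E; apply Rmult_lt_0_compat; auto.
Qed.

Lemma f_over_lhs_lim : is_lim (fun x => f x / lhs f k x) p_infty (1 / (a - 1)).
Proof.
  apply is_lim_of_exp, (is_lim_ext_loc (fun v => / lhs_ratio f k v)).
  - eapply filter_imp; [|exact lhs_exp_facts]; intros v (Pf & Pr & _ & E); rewrite E; field; lra.
  - replace (1 / (a - 1)) with (/ (a - 1)) by (field; lra).
    apply is_lim_inv_fin; [apply lhs_ratio_lim | lra].
Qed.

Lemma x_Derive_over_lhs_lim : is_lim (fun x => x * Derive f x / lhs f k x) p_infty (a / (a - 1)).
Proof.
  apply is_lim_of_exp, (is_lim_ext_loc (fun v => Derive (hlog f) v * / lhs_ratio f k v)).
  - eapply filter_imp; [|exact lhs_exp_facts]; intros v (Pf & Pr & Ef & E).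
    rewrite E, Ef; field; lra.
  - apply is_lim_mult_fin; [apply (SR_Derive_hlog_lim a f Hf)|].
    apply is_lim_inv_fin; [apply lhs_ratio_lim | lra].
Qed.

Lemma legendre_over_lhs_lim : is_lim (fun x => (x * Derive f x - f x) / lhs f k x) p_infty 1.
Proof.
  apply is_lim_of_exp, (is_lim_ext_loc (fun v => (Derive (hlog f) v - 1) * / lhs_ratio f k v)).
  - eapply filter_imp; [|exact lhs_exp_facts]; intros v (Pf & Pr & Ef & E).
    rewrite E, Ef; field; lra.
  - replace (Finite 1) with (Finite ((a - 1) * / (a - 1))) by (f_equal; field; lra).
    apply is_lim_mult_fin; [apply is_lim_minus'; [apply (SR_Derive_hlog_lim a f Hf) | apply is_lim_const]|].
    apply is_lim_inv_fin; [apply lhs_ratio_lim | lra].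
Qed.

Lemma lhs_exp_Phi : at_top (fun v => lhs f k (exp v) = exp (Phi f k v)).
Proof.
  eapply filter_imp; [|exact lhs_exp_facts]; intros v (Pf & Pr & _ & E).
  unfold Phi; rewrite exp_ln; auto; rewrite E; apply Rmult_lt_0_compat; auto.
Qed.

Lemma lhs_to_infty : is_lim (lhs f k) p_infty p_infty.
Proof.
  apply is_lim_of_exp, (is_lim_ext_loc (fun v => exp (Phi f k v))).
  - eapply filter_imp; [|exact lhs_exp_Phi]; intros v E; symmetry; exact E.
  - apply (is_lim_comp_p_infty exp); [apply is_lim_exp_p|].
    apply is_lim_p_infty_of_Derive_ge with (a / 2); [lra|].
    destruct (filter_ex _ eventually_solvable) as [t [St Ht]].
    exists t; intros v Hv; split; [apply (smooth_on_ex_derive t); auto | apply Ht, Hv].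
Qed.

(* The quotient [exp v * (f' o exp)'(v) / (lhs f k o exp)'(v)], see [rho_eq]. *)
Definition rho (v : R) : R :=
  ((Derive (hlog f) v - 1) * Derive (hlog f) v + Derive (Derive (hlog f)) v) /
  (Derive (Phi f k) v * lhs_ratio f k v).

Lemma rho_lim : is_lim rho p_infty 1.
Proof.
  assert (Hd2 : is_lim (Derive (Derive (hlog f))) p_infty 0)
    by exact (proj1 (proj2 (proj2 (SR_Derive_hlog_flat a f Hf 1)))).
  pose proof (SR_Derive_hlog_lim a f Hf) as Hd1.
  replace (Finite 1) with (Finite (((a - 1) * a + 0) * / (a * (a - 1)))) by (f_equal; field; lra).
  apply is_lim_mult_fin.
  - apply is_lim_plus'; auto; apply is_lim_mult_fin; auto; apply is_lim_minus'; auto; apply is_lim_const.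
  - apply is_lim_inv_fin; [apply is_lim_mult_fin; [apply Derive_Phi_lim | apply lhs_ratio_lim]|].
    apply Rmult_integral_contrapositive; lra.
Qed.

Lemma Derive_f_exp_eq : at_top (fun v => Derive f (exp v) = exp (hlog f v - v) * Derive (hlog f) v).
Proof.
  eapply filter_imp; [|exact lhs_exp_facts]; intros v (Pf & _ & Ef & _).
  rewrite exp_minus, exp_hlog by auto.
  apply Rmult_eq_reg_l with (exp v); [rewrite Ef; field|]; apply Rgt_not_eq, exp_pos.
Qed.

Lemma is_derive_Derive_f_exp : at_top (fun v => is_derive (fun w => Derive f (exp w)) v
  (exp (hlog f v - v) * ((Derive (hlog f) v - 1) * Derive (hlog f) v + Derive (Derive (hlog f)) v))).
Proof.
  pose proof (SR_hlog_smooth a f Hf) as S.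
  pose proof (at_top_ex_derive_of_smooth _ S) as D1.
  pose proof (at_top_ex_derive_of_smooth _ (filter_imp _ _ (fun t => smooth_on_Derive t _) S)) as D2.
  eapply filter_imp; [|exact (filter_and _ _ (at_top_locally _ Derive_f_exp_eq) (filter_and _ _ D1 D2))].
  intros v [Hloc [E1 E2]].
  apply is_derive_ext_loc with (fun w => exp (hlog f w - w) * Derive (hlog f) w).
  - eapply filter_imp; [|exact Hloc]; intros w E; symmetry; exact E.
  - auto_derive; auto.
    change (fun x => hlog f x) with (hlog f); change (fun x => Derive (hlog f) x) with (Derive (hlog f)).
    unfold Rminus; ring.
Qed.

Lemma is_derive_lhs_exp : at_top (fun v =>
  is_derive (fun w => lhs f k (exp w)) v (Derive (Phi f k) v * lhs f k (exp v))).
Proof.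
  pose proof (at_top_ex_derive_of_smooth _ Phi_smooth) as D.
  eapply filter_imp; [|exact (filter_and _ _ (at_top_locally _ lhs_exp_Phi) (filter_and _ _ lhs_exp_Phi D))].
  intros v [Hloc [E Dv]]; rewrite E.
  apply is_derive_ext_loc with (fun w => exp (Phi f k w)).
  - eapply filter_imp; [|exact Hloc]; intros w Ew; symmetry; exact Ew.
  - apply (is_derive_comp exp (Phi f k) v); [apply is_derive_exp | apply Derive_correct, Dv].
Qed.

Lemma rho_eq : at_top (fun v =>
  ex_derive (fun w => Derive f (exp w)) v /\ ex_derive (fun w => lhs f k (exp w)) v /\
  0 < Derive (fun w => lhs f k (exp w)) v /\
  exp v * Derive (fun w => Derive f (exp w)) v = rho v * Derive (fun w => lhs f k (exp w)) v).
Proof.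
  pose proof (is_lim_at_top_gt _ _ 0 Derive_Phi_lim ltac:(lra)) as HD.
  eapply filter_imp; [|exact (filter_and _ _ (filter_and _ _ is_derive_Derive_f_exp is_derive_lhs_exp)
    (filter_and _ _ lhs_exp_facts HD))].
  intros v [[D1 D2] [(Pf & Pr & _ & E) HDv]].
  split; [eexists; exact D1|]. split; [eexists; exact D2|].
  replace (Derive (fun w => Derive f (exp w)) v) with
    (exp (hlog f v - v) * ((Derive (hlog f) v - 1) * Derive (hlog f) v + Derive (Derive (hlog f)) v))
    by (symmetry; exact (is_derive_unique _ _ _ D1)).
  replace (Derive (fun w => lhs f k (exp w)) v) with (Derive (Phi f k) v * lhs f k (exp v))
    by (symmetry; exact (is_derive_unique _ _ _ D2)).
  rewrite E; split; [apply Rmult_lt_0_compat; [|apply Rmult_lt_0_compat]; auto|].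
  unfold rho; rewrite exp_minus, exp_hlog by auto; field; repeat split; try lra.
  apply Rgt_not_eq, exp_pos.
Qed.

Lemma lhs_exp_increment eps : 0 < eps -> exists d V, 0 < d /\ forall u u',
  V < u -> V < u' -> Rabs (u' - u) <= d ->
  Rabs (exp u * (Derive f (exp u') - Derive f (exp u)) - (lhs f k (exp u') - lhs f k (exp u)))
    <= eps * Rabs (lhs f k (exp u') - lhs f k (exp u)).
Proof.
  intros He.
  destruct (filter_and _ _ rho_eq (is_lim_at_top_near rho 1 (eps / 6) rho_lim ltac:(lra))) as [V HV].
  exists (Rmin 1 (eps / 6)), V; split; [apply Rmin_pos; lra|].
  intros u u' Hu Hu' Hd.
  pose proof (Rmin_l 1 (eps / 6)); pose proof (Rmin_r 1 (eps / 6)).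
  set (P := fun w => Derive f (exp w)); set (Q := fun w => lhs f k (exp w)).
  change (Rabs (exp u * (P u' - P u) - (Q u' - Q u)) <= eps * Rabs (Q u' - Q u)).
  assert (Hin : forall y, Rmin u u' <= y -> V < y) by (intros y Hy; unfold Rmin in Hy; destruct (Rle_dec u u'); lra).
  destruct (cauchy_mvt_between P Q u u') as [z [Hz Ecm]].
  { intros y Hy; destruct (HV y (Hin y (proj1 Hy))) as [(A & B & _) _]; auto. }
  destruct (HV z (Hin z (proj1 Hz))) as [(_ & _ & HQ & Erho) Hrho].
  fold P Q in Erho, HQ.
  assert (EP : P u' - P u = (Q u' - Q u) * Derive P z / Derive Q z)
    by (apply Rmult_eq_reg_r with (Derive Q z); [rewrite Ecm; field|]; lra).
  assert (Er : rho z = exp z * Derive P z / Derive Q z) by (rewrite Erho; field; lra).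
  replace (exp u * (P u' - P u) - (Q u' - Q u)) with ((Q u' - Q u) * (exp (u - z) * rho z - 1))
    by (rewrite EP, Er, exp_minus; field; split; [lra | apply Rgt_not_eq, exp_pos]).
  rewrite Rabs_mult, Rmult_comm; apply Rmult_le_compat_r; [apply Rabs_pos|].
  pose proof (Rabs_sub_between u u' z Hz) as Hzu; rewrite <- Rabs_Ropp, Ropp_minus_distr in Hzu.
  eapply Rle_trans; [apply exp_mul_near_one; lra|]. lra.
Qed.

Section Solution.

Variable t : R.
Hypotheses (Hsmooth : smooth_on t (Phi f k))
  (Hsolv : forall v, t < v -> a / 2 <= Derive (Phi f k) v /\ 0 < lhs f k (exp v)).

Local Notation psi := (inverse_above t (Phi f k)).
Local Notation g := (gsol f k t).
Local Notation r := (gsol_radius f k t).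

Let Hder v : t < v -> a / 2 <= Derive (Phi f k) v.
Proof. intros Hv; apply Hsolv, Hv. Qed.

Let Ha2 : 0 < a / 2.
Proof. lra. Qed.

Let psi_derivable w : Phi f k (t + 1) < w -> ex_derive psi w.
Proof. intros Hw; eexists; exact (is_derive_inverse_above _ _ _ Ha2 Hsmooth Hder w Hw). Qed.

Lemma gsol_radius_gt_1 : 1 < r.
Proof. unfold gsol_radius; rewrite <- exp_0; apply exp_increasing, exp_pos. Qed.

Lemma gsol_radius_lt L : r < L -> Phi f k (t + 1) < ln (ln L).
Proof. intros HL; apply lt_ln_of_exp_lt, lt_ln_of_exp_lt, HL. Qed.

Lemma lhs_exp_inverse w : Phi f k (t + 1) < w -> lhs f k (exp (psi w)) = exp w.
Proof.
  intros Hw; destruct (inverse_above_spec _ _ _ Ha2 Hsmooth Hder w Hw) as [A B].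
  rewrite <- B at 2; rewrite exp_Phi; auto; apply Hsolv; lra.
Qed.

Lemma gsol_is_solution_map : is_solution_map f k r g.
Proof.
  exists (exp (t + 1)); intros L HL.
  pose proof (gsol_radius_lt L HL) as Hw.
  assert (HlnL : 0 < ln L) by (pose proof (exp_pos (Phi f k (t + 1))); apply lt_ln_of_exp_lt in HL; lra).
  destruct (inverse_above_spec _ _ _ Ha2 Hsmooth Hder _ Hw) as [A _].
  split; [apply exp_increasing, A|]. split.
  - unfold sol_eq, gsol; fold (lhs f k (exp (psi (ln (ln L))))).
    rewrite lhs_exp_inverse, exp_ln; auto.
  - intros x Hx Sx; unfold sol_eq in Sx; fold (lhs f k x) in Sx.
    assert (Hx0 : 0 < x) by (pose proof (exp_pos (t + 1)); lra).
    assert (Hv : t + 1 < ln x) by (apply lt_ln_of_exp_lt, Hx).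
    unfold gsol; rewrite <- (exp_ln x Hx0) at 1; f_equal.
    rewrite <- (inverse_above_phi _ _ _ Ha2 Hsmooth Hder (ln x)) by lra.
    f_equal; unfold Phi; rewrite exp_ln, Sx; auto.
Qed.

Lemma inverse_lnln_to_infty : is_lim (fun L => psi (ln (ln L))) p_infty p_infty.
Proof.
  apply (is_lim_comp_p_infty psi), (is_lim_comp_p_infty ln); try apply is_lim_ln_p.
  exact (inverse_above_to_infty _ _ _ Ha2 Hsmooth Hder).
Qed.

Lemma gsol_to_infty : is_lim g p_infty p_infty.
Proof. exact (is_lim_comp_p_infty exp _ _ is_lim_exp_p inverse_lnln_to_infty). Qed.

Lemma Derive_inverse_flat : (forall n, flat n (Derive psi)) /\ is_lim (Derive psi) p_infty (/ a).
Proof.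
  apply (inverse_above_Derive_flat _ _ _ Ha2 Hsmooth Hder); [lra | apply Derive_Phi_flat | apply Derive_Phi_lim].
Qed.

Lemma gsol_smooth : smooth_on r g.
Proof.
  intros n; apply diff_on_exp_comp, diff_on_comp with (Phi f k (t + 1)).
  - exact (inverse_above_smooth _ _ _ Ha2 Hsmooth Hder n).
  - apply diff_on_comp with 0; [apply diff_on_ln | apply diff_on_mono with 0; [|apply diff_on_ln] |].
    + unfold gsol_radius; left; apply exp_pos.
    + intros L HL; apply lt_ln_of_exp_lt; rewrite exp_0; pose proof gsol_radius_gt_1; lra.
  - apply gsol_radius_lt.
Qed.

Lemma gsol_SR : SR_on r 0 g.
Proof.
  destruct Derive_inverse_flat as [Hflat Hlim].
  assert (Hln : at_top (fun x => ex_derive ln x)) by (exists 0; intros; eexists; apply is_derive_ln; auto).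
  assert (E : at_top (fun u => / u * Derive psi (ln u) = Derive (fun u => psi (ln u)) u)).
  { exists (exp (Phi f k (t + 1))); intros u Hu; symmetry; apply is_derive_unique.
    pose proof (exp_pos (Phi f k (t + 1))).
    apply (is_derive_comp psi ln u); [|apply is_derive_ln; lra].
    apply Derive_correct, psi_derivable, lt_ln_of_exp_lt, Hu. }
  apply SR_on_of_hlog with (fun u => psi (ln u)).
  - apply gsol_smooth.
  - intros; apply exp_pos.
  - exists 0; intros u _; unfold hlog, gsol; rewrite !ln_exp; reflexivity.
  - intros n; apply flat_ext with (1 := E), flat_mult; [apply flat_Rinv|].
    apply flat_comp; auto; [apply is_lim_ln_p|].
    apply flat_ext with Rinv; [|apply flat_Rinv].
    exists 0; intros; symmetry; apply is_derive_unique, is_derive_ln; auto.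
  - apply (is_lim_ext_loc _ _ p_infty _ E).
    replace (Finite 0) with (Finite (0 * / a)) by (f_equal; ring).
    apply is_lim_mult_fin; [apply is_lim_Rinv_p_infty|].
    apply (is_lim_comp_p_infty (Derive psi) ln); [exact Hlim | apply is_lim_ln_p].
Qed.

Lemma gsol_exp_SR : SR_on (ln r) (1 / a) (fun L => g (exp L)).
Proof.
  destruct Derive_inverse_flat as [Hflat Hlim].
  apply SR_on_of_hlog with psi.
  - intros n; apply diff_on_comp with r; [apply gsol_smooth | apply diff_on_exp|].
    intros x Hx; rewrite <- (exp_ln r) by (pose proof gsol_radius_gt_1; lra); apply exp_increasing, Hx.
  - intros; apply exp_pos.
  - exists 0; intros u _; unfold hlog, gsol; rewrite !ln_exp; reflexivity.
  - exact Hflat.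
  - replace (1 / a) with (/ a) by (field; lra); exact Hlim.
Qed.

Lemma gsol_log_elasticity_lim : is_lim (fun L => Derive g L * L * ln L / g L) p_infty (1 / a).
Proof.
  destruct Derive_inverse_flat as [_ Hlim].
  apply (is_lim_ext_loc (fun L => Derive psi (ln (ln L)))).
  - exists r; intros L HL; pose proof gsol_radius_gt_1 as Hr1.
    pose proof (gsol_radius_lt L HL) as Hw.
    assert (HlnL : 0 < ln L) by (apply lt_ln_of_exp_lt; rewrite exp_0; lra).
    assert (Dg : is_derive g L (/ ln L * / L * Derive psi (ln (ln L)) * g L)).
    { unfold gsol; apply (is_derive_comp exp (fun L => psi (ln (ln L))) L); [apply is_derive_exp|].
      apply (is_derive_comp psi (fun L => ln (ln L)) L); [apply Derive_correct, psi_derivable, Hw|].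
      replace (/ ln L * / L) with (/ L * / ln L) by ring.
      apply (is_derive_comp ln ln L); apply is_derive_ln; lra. }
    rewrite (is_derive_unique _ _ _ Dg); pose proof (exp_pos (psi (ln (ln L)))).
    unfold gsol; field; repeat split; lra.
  - replace (1 / a) with (/ a) by (field; lra).
    exact (is_lim_comp_p_infty (Derive psi) _ _ Hlim
      (is_lim_comp_p_infty ln ln _ is_lim_ln_p is_lim_ln_p)).
Qed.

Lemma gsol_lhs_ratio_lim (p : R -> R) (l : R) :
  is_lim (fun x => p x / lhs f k x) p_infty l -> is_lim (fun L => p (g L) / ln L) p_infty l.
Proof.
  intros Hp; apply (is_lim_ext_loc (fun L => p (g L) / lhs f k (g L))).
  - exists r; intros L HL; destruct gsol_is_solution_map as [xo Hxo].
    destruct (Hxo L HL) as (_ & E & _); unfold sol_eq in E; fold (lhs f k (g L)) in E; rewrite E; reflexivity.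
  - exact (is_lim_comp_p_infty (fun x => p x / lhs f k x) g _ Hp gsol_to_infty).
Qed.

Lemma inverse_lnln_increment γ d : 0 < γ -> 0 < d -> at_top (fun L => forall y,
  Rpower (ln L) (- γ) <= y <= Rpower (ln L) γ -> Rabs (psi (ln (ln (y * L))) - psi (ln (ln L))) <= d).
Proof.
  intros Hg Hd; set (e := Rmin (1 / 2) (a * d / 4)).
  assert (He : 0 < e) by (apply Rmin_pos; [lra | apply Rdiv_lt_0_compat; [apply Rmult_lt_0_compat|]; lra]).
  pose proof (Rmin_l (1 / 2) (a * d / 4)) as He1; pose proof (Rmin_r (1 / 2) (a * d / 4)) as He2.
  fold e in He1, He2.
  pose proof (lnln_le_ln γ e Hg He) as H1.
  pose proof (at_top_comp ln _ is_lim_ln_p (at_top_gt (2 * exp (Phi f k (t + 1))))) as H2.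
  eapply filter_imp; [|exact (filter_and _ _ (at_top_gt 0) (filter_and _ _ H1 H2))].
  intros L [HL0 [[HL Hl] Hl2]] y Hy; cbv beta in Hl2.
  destruct (Rpower_range_ln γ (ln L) y Hy) as [Hy0 Hly].
  rewrite ln_mult, Rplus_comm by auto; set (l := ln L) in *.
  assert (Hel : e * l <= l / 2) by (assert (e * l <= 1 / 2 * l) by (apply Rmult_le_compat_r; lra); lra).
  apply Rabs_le_between in Hly as Hly'.
  pose proof (exp_pos (Phi f k (t + 1))).
  assert (Hw : Phi f k (t + 1) < ln l) by (apply lt_ln_of_exp_lt; lra).
  assert (Hw' : Phi f k (t + 1) < ln (l + ln y)) by (apply lt_ln_of_exp_lt; lra).
  pose proof (inverse_above_lipschitz _ _ _ Ha2 Hsmooth Hder _ _ Hw Hw') as Hlip.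
  pose proof (Rabs_ln_increment_le (l / 2) l (l + ln y) ltac:(lra) ltac:(lra) ltac:(lra)) as Hln.
  replace (l + ln y - l) with (ln y) in Hln by ring.
  assert (Hb : / (l / 2) * Rabs (ln y) <= a * d / 2).
  { apply Rle_trans with (/ (l / 2) * (e * l)).
    - apply Rmult_le_compat_l; [left; apply Rinv_0_lt_compat|]; lra.
    - replace (/ (l / 2) * (e * l)) with (2 * e) by (field; lra); lra. }
  apply Rmult_le_reg_l with (a / 2); lra.
Qed.

Lemma gsol_Derive_f_increment γ δ : 0 < γ -> 0 < δ -> exists z, r < z /\ forall L y, z < L ->
  Rpower (ln L) (- γ) <= y <= Rpower (ln L) γ ->
  Rabs (g L * (Derive f (g (y * L)) - Derive f (g L)) - ln y) <= δ * Rabs (ln y).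
Proof.
  intros Hg Hd; destruct (lhs_exp_increment δ Hd) as (d & V & Hd0 & Hinc).
  assert (Hfar : at_top (fun L => r < L /\ V < psi (ln (ln L))))
    by exact (filter_and _ _ (at_top_gt r) (inverse_lnln_to_infty _ (at_top_gt V))).
  destruct (filter_and _ _ (filter_and _ _ Hfar (at_top_range_scale γ _ Hg Hfar))
    (inverse_lnln_increment γ d Hg Hd0)) as [M HM].
  exists (Rmax M r + 1); split; [pose proof (Rmax_r M r); lra|].
  intros L y HL Hy; pose proof (Rmax_l M r).
  destruct (HM L ltac:(lra)) as [[[HrL HVL] Hscale] Hclose].
  destruct (Hscale y Hy) as [HryL HVyL]; destruct (Rpower_range_ln γ (ln L) y Hy) as [Hy0 _].
  destruct gsol_is_solution_map as [xo Hxo].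
  destruct (Hxo L HrL) as (_ & E & _), (Hxo (y * L) HryL) as (_ & E' & _).
  unfold sol_eq in E, E'; fold (lhs f k (g L)) in E; fold (lhs f k (g (y * L))) in E'.
  replace (ln y) with (lhs f k (g (y * L)) - lhs f k (g L))
    by (rewrite E, E', ln_mult; [ring | lra | pose proof gsol_radius_gt_1; lra]).
  apply Hinc; auto.
Qed.

End Solution.

Lemma solution_map_props r' g' : is_solution_map f k r' g' ->
  is_lim g' p_infty p_infty /\ at_top (fun L => lhs f k (g' L) = ln L).
Proof.
  intros [xo Hxo]; split; [|exists r'; intros L HL; exact (proj1 (proj2 (Hxo L HL)))].
  destruct (filter_ex _ eventually_solvable) as [t [St Ht]].
  pose proof (gsol_is_solution_map t St Ht) as [xo' Hxo'].
  apply (is_lim_ext_loc (gsol f k t)); [|exact (gsol_to_infty t St Ht)].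
  pose proof (gsol_to_infty t St Ht _ (at_top_gt xo)) as Hfar.
  eapply filter_imp; [|exact (filter_and _ _ (filter_and _ _ (at_top_gt r') (at_top_gt (gsol_radius f k t))) Hfar)].
  intros L [[HL HL'] Hg]; cbv beta in Hg.
  destruct (Hxo' L HL') as (_ & E & _); exact (proj2 (proj2 (Hxo L HL)) _ Hg E).
Qed.

End Equation.

(** * Solutions for two perturbations *)

Section Comparison.

Variables (a b c r0 r1 : R) (f k0 k1 g0 g1 : R -> R).
Hypotheses (Ha : 1 < a) (Hba : b < a) (Hf : SR a f) (Hk0 : SR b k0) (Hk1 : SR b k1)
  (Hc : is_lim (fun x => k1 x - k0 x) p_infty c)
  (Hg0 : is_solution_map f k0 r0 g0) (Hg1 : is_solution_map f k1 r1 g1).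

Lemma ln_lhs_diff_lim : is_lim (fun x => ln (lhs f k1 x) - ln (lhs f k0 x)) p_infty 0.
Proof.
  pose proof (lhs_to_infty a b f k0 Ha Hba Hf Hk0) as L0.
  pose proof (lhs_to_infty a b f k1 Ha Hba Hf Hk1) as L1.
  apply (is_lim_ext_loc (fun x => ln (1 + (k1 x - k0 x) * / lhs f k0 x))).
  - eapply filter_imp; [|exact (filter_and _ _ (at_top_comp (lhs f k0) _ L0 (at_top_gt 0)) (at_top_comp (lhs f k1) _ L1 (at_top_gt 0)))].
    intros x [P0 P1]; cbv beta in P0, P1.
    replace (1 + (k1 x - k0 x) * / lhs f k0 x) with (lhs f k1 x * / lhs f k0 x)
      by (unfold lhs; field; unfold lhs in P0; lra).
    rewrite ln_mult, ln_Rinv by (auto; apply Rinv_0_lt_compat; auto); ring.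
  - replace (Finite 0) with (Finite (ln (1 + c * 0))) by (f_equal; rewrite Rmult_0_r, Rplus_0_r, ln_1; reflexivity).
    apply is_lim_ln_fin; [|lra].
    apply is_lim_plus'; [apply is_lim_const | apply is_lim_mult_fin; auto].
    exact (is_lim_comp_p_infty Rinv (lhs f k0) _ is_lim_Rinv_p_infty L0).
Qed.

Lemma solution_maps_log_close : is_lim (fun L => ln (g1 L) - ln (g0 L)) p_infty 0.
Proof.
  destruct (solution_map_props a b f k0 Ha Hba Hf Hk0 r0 g0 Hg0) as [G0 S0].
  destruct (solution_map_props a b f k1 Ha Hba Hf Hk1 r1 g1 Hg1) as [G1 S1].
  destruct (filter_ex _ (eventually_solvable a b f k0 Ha Hba Hf Hk0)) as [t [St Ht]].
  apply is_lim_abs_le with (fun L => ln (lhs f k1 (g1 L)) - ln (lhs f k0 (g1 L))) (2 / a).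
  - eapply filter_imp; [|exact (filter_and _ _ (filter_and _ _ (at_top_comp g0 _ G0 (at_top_gt (exp t)))
      (at_top_comp g1 _ G1 (at_top_gt (exp t)))) (filter_and _ _ S0 S1))].
    intros L [[P0 P1] [E0 E1]]; cbv beta in P0, P1.
    pose proof (exp_pos t).
    assert (Phi0 : Phi f k0 (ln (g0 L)) = ln (lhs f k1 (g1 L))) by (unfold Phi; rewrite exp_ln, E0, E1; lra).
    assert (Phi1 : Phi f k0 (ln (g1 L)) = ln (lhs f k0 (g1 L))) by (unfold Phi; rewrite exp_ln; lra).
    pose proof (Rabs_increment_ge (Phi f k0) t (a / 2) (ln (g0 L)) (ln (g1 L)) ltac:(lra)
      (fun v Hv => conj (smooth_on_ex_derive t _ v St Hv) (proj1 (Ht v Hv)))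
      (lt_ln_of_exp_lt _ _ P0) (lt_ln_of_exp_lt _ _ P1)) as Hinc.
    rewrite Phi0, Phi1, (Rabs_minus_sym (ln (lhs f k0 (g1 L)))) in Hinc.
    apply Rmult_le_reg_l with (a / 2); [lra|].
    replace (a / 2 * (2 / a * Rabs (ln (lhs f k1 (g1 L)) - ln (lhs f k0 (g1 L)))))
      with (Rabs (ln (lhs f k1 (g1 L)) - ln (lhs f k0 (g1 L)))) by (field; lra).
    exact Hinc.
  - exact (is_lim_comp_p_infty _ g1 _ ln_lhs_diff_lim G1).
Qed.

Lemma solution_maps_compare_g0 :
  is_lim (fun L => g0 L * (Derive f (g0 L) - Derive f (g1 L))) p_infty c.
Proof.
  destruct (solution_map_props a b f k0 Ha Hba Hf Hk0 r0 g0 Hg0) as [G0 S0].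
  destruct (solution_map_props a b f k1 Ha Hba Hf Hk1 r1 g1 Hg1) as [G1 S1].
  apply is_lim_rel_error with (fun L => k1 (g1 L) - k0 (g1 L)); [exact (is_lim_comp_p_infty _ g1 _ Hc G1)|].
  intros eps He; destruct (lhs_exp_increment a b f k0 Ha Hba Hf Hk0 eps He) as (d & V & Hd & Hinc).
  pose proof (is_lim_at_top_near _ _ d solution_maps_log_close Hd) as Hclose.
  eapply filter_imp; [|exact (filter_and _ _ (filter_and _ _ (at_top_comp g0 _ G0 (at_top_gt (exp V)))
    (at_top_comp g1 _ G1 (at_top_gt (exp V)))) (filter_and _ _ Hclose (filter_and _ _ S0 S1)))].
  intros L [[P0 P1] [Hcl [E0 E1]]]; cbv beta in P0, P1, Hcl; rewrite Rminus_0_r in Hcl.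
  pose proof (exp_pos V).
  specialize (Hinc (ln (g0 L)) (ln (g1 L)) (lt_ln_of_exp_lt _ _ P0) (lt_ln_of_exp_lt _ _ P1) (Rlt_le _ _ Hcl)).
  rewrite !exp_ln in Hinc by lra.
  replace (lhs f k0 (g1 L) - lhs f k0 (g0 L)) with (- (k1 (g1 L) - k0 (g1 L))) in Hinc
    by (rewrite E0, <- E1; unfold lhs; ring).
  rewrite Rabs_Ropp in Hinc; rewrite <- Rabs_Ropp.
  replace (- (g0 L * (Derive f (g0 L) - Derive f (g1 L)) - (k1 (g1 L) - k0 (g1 L))))
    with (g0 L * (Derive f (g1 L) - Derive f (g0 L)) - - (k1 (g1 L) - k0 (g1 L))) by ring.
  exact Hinc.
Qed.

Lemma solution_maps_compare_g1 :
  is_lim (fun L => g1 L * (Derive f (g0 L) - Derive f (g1 L))) p_infty c.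
Proof.
  destruct (solution_map_props a b f k0 Ha Hba Hf Hk0 r0 g0 Hg0) as [G0 _].
  destruct (solution_map_props a b f k1 Ha Hba Hf Hk1 r1 g1 Hg1) as [G1 _].
  apply (is_lim_ext_loc (fun L => exp (ln (g1 L) - ln (g0 L)) * (g0 L * (Derive f (g0 L) - Derive f (g1 L))))).
  - eapply filter_imp; [|exact (filter_and _ _ (at_top_comp g0 _ G0 (at_top_gt 0)) (at_top_comp g1 _ G1 (at_top_gt 0)))].
    intros L [P0 P1]; cbv beta in P0, P1; rewrite exp_minus, !exp_ln by auto; field; lra.
  - replace c with (exp 0 * c) by (rewrite exp_0; ring).
    apply is_lim_mult_fin; [apply is_lim_exp_fin, solution_maps_log_close | apply solution_maps_compare_g0].
Qed.

End Comparison.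

Theorem lemma2p2 (alpha b : R) (f k : R -> R) :
  1 < alpha -> SR alpha f -> b < alpha -> SR b k ->
  (* (i) *)
  (exists (r_o : R) (g : R -> R),
     0 < r_o /\
     is_solution_map f k r_o g /\
     SR_on r_o 0 g /\
     SR_on (ln r_o) (1 / alpha) (fun L => g (exp L)) /\
     (* (ii) *)
     (forall gamma delta : R, 0 < gamma -> 0 < delta ->
        exists z : R, r_o < z /\
          forall L y : R, z < L ->
            Rpower (ln L) (- gamma) <= y <= Rpower (ln L) gamma ->
            Rabs (g L * (Derive f (g (y * L)) - Derive f (g L)) - ln y)
              <= delta * Rabs (ln y)) /\
     (* (iii) *)
     is_lim (fun L => Derive g L * L * ln L / g L) p_infty (Finite (1 / alpha)) /\
     is_lim (fun L => f (g L) / ln L) p_infty (Finite (1 / (alpha - 1))) /\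
     is_lim (fun L => g L * Derive f (g L) / ln L) p_infty
       (Finite (alpha / (alpha - 1))) /\
     is_lim (fun L => (g L * Derive f (g L) - f (g L)) / ln L) p_infty
       (Finite 1)) /\
  (* (iv) *)
  (forall (k0 k1 : R -> R) (c r0 r1 : R) (g0 g1 : R -> R),
     SR b k0 -> SR b k1 ->
     is_lim (fun L => k1 L - k0 L) p_infty (Finite c) ->
     is_solution_map f k0 r0 g0 -> is_solution_map f k1 r1 g1 ->
     is_lim (fun L => g0 L * (Derive f (g0 L) - Derive f (g1 L))) p_infty (Finite c) /\
     is_lim (fun L => g1 L * (Derive f (g0 L) - Derive f (g1 L))) p_infty (Finite c)).
Proof.
  intros Ha Hf Hb Hk; split.
  - destruct (filter_ex _ (eventually_solvable alpha b f k Ha Hb Hf Hk)) as [t [St Ht]].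
    exists (gsol_radius f k t), (gsol f k t).
    split; [apply exp_pos|].
    split; [exact (gsol_is_solution_map alpha f k Ha t St Ht)|].
    split; [exact (gsol_SR alpha b f k Ha Hb Hf Hk t St Ht)|].
    split; [exact (gsol_exp_SR alpha b f k Ha Hb Hf Hk t St Ht)|].
    split; [exact (gsol_Derive_f_increment alpha b f k Ha Hb Hf Hk t St Ht)|].
    split; [exact (gsol_log_elasticity_lim alpha b f k Ha Hb Hf Hk t St Ht)|].
    split; [|split].
    + exact (gsol_lhs_ratio_lim alpha f k Ha t St Ht f _ (f_over_lhs_lim alpha b f k Ha Hb Hf Hk)).
    + exact (gsol_lhs_ratio_lim alpha f k Ha t St Ht (fun x => x * Derive f x) _
        (x_Derive_over_lhs_lim alpha b f k Ha Hb Hf Hk)).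
    + exact (gsol_lhs_ratio_lim alpha f k Ha t St Ht (fun x => x * Derive f x - f x) _
        (legendre_over_lhs_lim alpha b f k Ha Hb Hf Hk)).
  - intros k0 k1 c r0 r1 g0 g1 Hk0 Hk1 Hc Hg0 Hg1; split.
    + exact (solution_maps_compare_g0 alpha b c r0 r1 f k0 k1 g0 g1 Ha Hb Hf Hk0 Hk1 Hc Hg0 Hg1).
    + exact (solution_maps_compare_g1 alpha b c r0 r1 f k0 k1 g0 g1 Ha Hb Hf Hk0 Hk1 Hc Hg0 Hg1).
Qed.
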